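(* Let $\mathbb{A}$ be a 2-category having the two-dimensional kernel diagram of a 1-cell $l$. Then: (1) $l$ is a co-Kleisli morphism if and only if $l$ has a left adjoint and $l$ is an effective op-faithful morphism; (2) $l$ is a Kleisli morphism if and only if $l$ has a right adjoint and $l$ is an effective op-faithful morphism.
   Context: A 2-category is a $\mathbf{Cat}$-enriched category; composition of 1-cells is juxtaposition, vertical composition of 2-cells is $\cdot$, horizontal composition is $\ast$, $\mathrm{id}_f$ is the identity 2-cell on $f$. $\mathbb{A}^{\mathrm{op}}$, $\mathbb{A}^{\mathrm{coop}}$ are obtained from $\mathbb{A}$ by reversing 1-cells, resp. both 1-cells and 2-cells. A 1-cell is an equivalence if it has a pseudo-inverse up to invertible 2-cells. Adjunctions (in $\mathbb{A}$) are given by unit and counit 2-cells satisfying the triangle identities. For a 1-cell $p:e\to b$ of a 2-category $\mathbb{B}$: an opcomma object of $p$ along itself is $b\uparrow_pb$ with $\delta^0,\delta^1:b\to b\uparrow_pb$, $\alpha:\delta^1p\Rightarrow\delta^0p$ such that for every $y$, $h\mapsto(h\delta^0,h\delta^1,\mathrm{id}_h\ast\alpha)$ is an isomorphism from $\mathbb{B}(b\uparrow_pb,y)$ onto the category of triples $(h_0,h_1:b\to y,\beta:h_1p\Rightarrow h_0p)$ with morphisms pairs $(\xi_0,\xi_1)$ with $(\xi_0\ast\mathrm{id}_p)\cdot\beta=\beta'\cdot(\xi_1\ast\mathrm{id}_p)$. A two-dimensional pushout of a span $f_0,f_1$ is $P$ with $q_0,q_1$, $q_0f_0=q_1f_1$,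 such that $k\mapsto(kq_0,kq_1)$ is an isomorphism from $\mathbb{B}(P,y)$ onto pairs $(k_0,k_1)$ with $k_0f_0=k_1f_1$ (morphisms pairs of 2-cells $(\xi_0,\xi_1)$ with $\xi_0\ast\mathrm{id}_{f_0}=\xi_1\ast\mathrm{id}_{f_1}$). $\mathbb{B}$ has the two-dimensional cokernel diagram of $p$ if it has $b\uparrow_pb$ and a two-dimensional pushout $b\uparrow_pb\uparrow_pb$ of $(\delta^0,\delta^1)$ with $D^0,D^2$, $D^2\delta^0=D^0\delta^1$; $D^1$ is the unique 1-cell with $D^1\delta^1=D^2\delta^1$, $D^1\delta^0=D^0\delta^0$, $\mathrm{id}_{D^1}\ast\alpha=(\mathrm{id}_{D^0}\ast\alpha)\cdot(\mathrm{id}_{D^2}\ast\alpha)$; $s^0$ is unique with $s^0\delta^0=s^0\delta^1=\mathrm{id}_b$, $\mathrm{id}_{s^0}\ast\alpha=\mathrm{id}_p$. $\mathrm{Desc}_p(y)$: pairs $(h:y\to b,\beta:\delta^1h\Rightarrow\delta^0h)$ with $(\mathrm{id}_{D^0}\ast\beta)\cdot(\mathrm{id}_{D^2}\ast\beta)=\mathrm{id}_{D^1}\ast\beta$, $\mathrm{id}_{s^0}\ast\beta=\mathrm{id}_h$, morphisms $\xi:h_1\Rightarrow h_0$ with $\beta_0\cdot(\mathrm{id}_{\delta^1}\ast\xi)=(\mathrm{id}_{\delta^0}\ast\xi)\cdot\beta_1$; a lax descent object is $L$, $d:L\to b$, $\Psi:\delta^1d\Rightarrow\delta^0d$ with $g\mapsto(dg,\Psi\ast\mathrm{id}_g)$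 an isomorphism $\mathbb{B}(y,L)\cong\mathrm{Desc}_p(y)$ for all $y$; $p^H$ is unique with $dp^H=p$, $\Psi\ast\mathrm{id}_{p^H}=\alpha$. $p$ is effective faithful in $\mathbb{B}$ if $\mathbb{B}$ has the two-dimensional cokernel diagram of $p$, a lax descent object of it, and $p^H$ is an equivalence. The codensity monad of $p$ is $(b,t,m,\eta)$ from a right Kan extension $(t,\gamma)$ of $p$ along $p$ (i.e. $\gamma:tp\Rightarrow p$ with $\beta\mapsto\gamma\cdot(\beta\ast\mathrm{id}_p)$ bijective from 2-cells $k\Rightarrow t$ to 2-cells $kp\Rightarrow p$), $m$ unique with $\gamma\cdot(m\ast\mathrm{id}_p)=\gamma\cdot(\mathrm{id}_t\ast\gamma)$, $\eta$ unique with $\gamma\cdot(\eta\ast\mathrm{id}_p)=\mathrm{id}_p$. An Eilenberg–Moore object is $b^{\mathsf{T}}$ with $u$, $\mu:tu\Rightarrow u$ such that $g\mapsto(ug,\mu\ast\mathrm{id}_g)$ is an isomorphism onto the category of pairs $(h,\beta:th\Rightarrow h)$ with $\beta\cdot(\mathrm{id}_t\ast\beta)=\beta\cdot(m\ast\mathrm{id}_h)$, $\beta\cdot(\eta\ast\mathrm{id}_h)=\mathrm{id}_h$ (morphisms $\xi$ with $\xi\cdot\beta_1=\beta_0\cdot(\mathrm{id}_t\ast\xi)$). $p$ is monadic in $\mathbb{B}$ if it has a codensity monad with an Eilenberg–Moore object and the unique $p^{\mathsf{T}}$ with $up^{\mathsf{T}}=p$, $\mu\ast\mathrm{id}_{p^{\mathsf{T}}}=\gamma$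 is an equivalence. Duals in $\mathbb{A}$: the two-dimensional kernel diagram of $l$ is its two-dimensional cokernel diagram in $\mathbb{A}^{\mathrm{op}}$; $l$ is effective op-faithful if it is effective faithful in $\mathbb{A}^{\mathrm{op}}$; $l$ is a Kleisli morphism if it is monadic in $\mathbb{A}^{\mathrm{op}}$, and a co-Kleisli morphism if it is monadic in $\mathbb{A}^{\mathrm{coop}}$. *)

Record TwoCatData : Type := MkTwoCatData {
  ob : Type;
  hom : ob -> ob -> Type;
  idm : forall a : ob, hom a a;
  comp : forall a b c : ob, hom b c -> hom a b -> hom a c;
  cell : forall a b : ob, hom a b -> hom a b -> Type;
  vid : forall (a b : ob) (f : hom a b), cell a b f f;
  vcomp : forall (a b : ob) (f g h : hom a b),
      cell a b g h -> cell a b f g -> cell a b f h;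
  hcomp : forall (a b c : ob) (f f' : hom b c) (g g' : hom a b),
      cell b c f f' -> cell a b g g' ->
      cell a c (comp a b c f g) (comp a b c f' g')
}.

Arguments hom t _ _ : rename.
Arguments idm {t} a : rename.
Arguments comp {t a b c} g f : rename.
Arguments cell {t a b} f g : rename.
Arguments vid {t a b} f : rename.
Arguments vcomp {t a b f g h} _ _ : rename.
Arguments hcomp {t a b c f f' g g'} _ _ : rename.

(* g ⊚ f : first f, then g (juxtaposition gf of the paper) *)
Notation "g ⊚ f" := (comp g f) (at level 40, left associativity).

Definition cast {C : TwoCatData} {a b : ob C} {f f' g g' : hom C a b}
  (e1 : f = f') (e2 : g = g') (x : cell f g) : cell f' g' :=
  match e1 in _ = f1 return cell f1 g' with
  | eq_refl => match e2 in _ = g1 return cell f g1 with eq_refl => x end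
  end.

Record TwoCatAxioms (C : TwoCatData) : Prop := {
  assoc : forall (a b c d : ob C) (h : hom C c d) (g : hom C b c) (f : hom C a b),
      (h ⊚ g) ⊚ f = h ⊚ (g ⊚ f);
  idl : forall (a b : ob C) (f : hom C a b), idm b ⊚ f = f;
  idr : forall (a b : ob C) (f : hom C a b), f ⊚ idm a = f;
  vassoc : forall (a b : ob C) (f g h k : hom C a b)
      (γ : cell h k) (β : cell g h) (α : cell f g),
      vcomp (vcomp γ β) α = vcomp γ (vcomp β α);
  vidl : forall (a b : ob C) (f g : hom C a b) (α : cell f g), vcomp (vid g) α = α;
  vidr : forall (a b : ob C) (f g : hom C a b) (α : cell f g), vcomp α (vid f) = α;
  hvid : forall (a b c : ob C) (f : hom C b c) (g : hom C a b),
      hcomp (vid f) (vid g) = vid (f ⊚ g);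
  interchange : forall (a b c : ob C) (f f' f'' : hom C b c) (g g' g'' : hom C a b)
      (β : cell f f') (β' : cell f' f'') (α : cell g g') (α' : cell g' g''),
      hcomp (vcomp β' β) (vcomp α' α) = vcomp (hcomp β' α') (hcomp β α);
  hassoc : forall (a b c d : ob C) (h h' : hom C c d) (g g' : hom C b c)
      (f f' : hom C a b) (γ : cell h h') (β : cell g g') (α : cell f f'),
      cast (assoc a b c d h g f) (assoc a b c d h' g' f') (hcomp (hcomp γ β) α)
      = hcomp γ (hcomp β α);
  hidl : forall (a b : ob C) (f f' : hom C a b) (α : cell f f'),
      cast (idl a b f) (idl a b f') (hcomp (vid (idm b)) α) = α;
  hidr : forall (a b : ob C) (f f' : hom C a b) (α : cell f f'),
      cast (idr a b f) (idr a b f') (hcomp α (vid (idm a))) = α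
}.

Record TwoCat : Type := MkTwoCat {
  tc_data :> TwoCatData;
  tc_ax : TwoCatAxioms tc_data
}.

Definition opData (C : TwoCatData) : TwoCatData :=
  {| ob := ob C;
     hom := fun a b => hom C b a;
     idm := fun a => idm a;
     comp := fun a b c (g : hom C c b) (f : hom C b a) => @comp C c b a f g;
     cell := fun a b (f g : hom C b a) => @cell C b a f g;
     vid := fun a b f => @vid C b a f;
     vcomp := fun a b f g h β α => @vcomp C b a f g h β α;
     hcomp := fun a b c f f' g g' β α => @hcomp C c b a g g' f f' α β |}.

Definition coopData (C : TwoCatData) : TwoCatData :=
  {| ob := ob C;
     hom := fun a b => hom C b a;
     idm := fun a => idm a;
     comp := fun a b c (g : hom C c b) (f : hom C b a) => @comp C c b a f g;
     cell := fun a b (f g : hom C b a) => @cell C b a g f;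
     vid := fun a b f => @vid C b a f;
     vcomp := fun a b f g h β α => @vcomp C b a h g f α β;
     hcomp := fun a b c f f' g g' β α => @hcomp C c b a g' g f' f α β |}.

Lemma cast_sym (C : TwoCatData) (a b : ob C) (f f' g g' : hom C a b)
  (e1 : f = f') (e2 : g = g') (x : cell f g) (y : cell f' g') :
  cast e1 e2 x = y -> x = cast (eq_sym e1) (eq_sym e2) y.
Proof. destruct e1, e2; simpl; auto. Qed.

Lemma cast_coop (C : TwoCatData) (a b : ob C) (f f' g g' : hom C b a)
  (e1 : f = f') (e2 : g = g') (x : @cell C b a g f) :
  @cast (coopData C) a b f f' g g' e1 e2 x = @cast C b a g g' f f' e2 e1 x.
Proof. destruct e1, e2; reflexivity. Qed.

Definition opAx (C : TwoCatData) (H : TwoCatAxioms C) : TwoCatAxioms (opData C).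
Proof.
  unshelve eapply (Build_TwoCatAxioms (opData C)
    (fun a b c d h g f => eq_sym (assoc C H d c b a f g h))
    (fun a b f => idr C H b a f) (fun a b f => idl C H b a f)); simpl; intros.
  - apply (vassoc C H).
  - apply (vidl C H).
  - apply (vidr C H).
  - apply (hvid C H).
  - apply (interchange C H).
  - symmetry. apply (cast_sym C). exact (hassoc C H _ _ _ _ _ _ _ _ _ _ α β γ).
  - exact (hidr C H _ _ _ _ α).
  - exact (hidl C H _ _ _ _ α).
Defined.

Definition coopAx (C : TwoCatData) (H : TwoCatAxioms C) : TwoCatAxioms (coopData C).
Proof.
  unshelve eapply (Build_TwoCatAxioms (coopData C)
    (fun a b c d h g f => eq_sym (assoc C H d c b a f g h))
    (fun a b f => idr C H b a f) (fun a b f => idl C H b a f)); simpl; intros.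
  - symmetry; apply (vassoc C H).
  - apply (vidr C H).
  - apply (vidl C H).
  - apply (hvid C H).
  - apply (interchange C H).
  - rewrite cast_coop. symmetry. apply (cast_sym C).
    exact (hassoc C H _ _ _ _ _ _ _ _ _ _ α β γ).
  - rewrite cast_coop. exact (hidr C H _ _ _ _ α).
  - rewrite cast_coop. exact (hidl C H _ _ _ _ α).
Defined.

Definition op (A : TwoCat) : TwoCat := @MkTwoCat (opData A) (opAx A (tc_ax A)).
Definition coop (A : TwoCat) : TwoCat := @MkTwoCat (coopData A) (coopAx A (tc_ax A)).

Section Notions.
Context {B : TwoCat}.

Definition asc {a b c d : ob B} (h : hom B c d) (g : hom B b c) (f : hom B a b) :
  (h ⊚ g) ⊚ f = h ⊚ (g ⊚ f) := assoc _ (tc_ax B) a b c d h g f.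
Definition lid {a b : ob B} (f : hom B a b) : idm b ⊚ f = f := idl _ (tc_ax B) a b f.
Definition rid {a b : ob B} (f : hom B a b) : f ⊚ idm a = f := idr _ (tc_ax B) a b f.

Definition wl {a b c : ob B} (h : hom B b c) {f g : hom B a b} (x : cell f g) :
  cell (h ⊚ f) (h ⊚ g) := hcomp (vid h) x.
Definition wr {a b c : ob B} {f g : hom B b c} (x : cell f g) (h : hom B a b) :
  cell (f ⊚ h) (g ⊚ h) := hcomp x (vid h).

Definition reassoc1 {a b c d : ob B} {x : hom B c d} {y : hom B b c} {w : hom B b d}
  (E : x ⊚ y = w) (z : hom B a b) : x ⊚ (y ⊚ z) = w ⊚ z :=
  eq_trans (eq_sym (asc x y z)) (f_equal (fun u => u ⊚ z) E).
Definition reassoc2 {a b c d : ob B} {x x' : hom B c d} {y y' : hom B b c}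
  (E : x ⊚ y = x' ⊚ y') (z : hom B a b) : x ⊚ (y ⊚ z) = x' ⊚ (y' ⊚ z) :=
  eq_trans (reassoc1 E z) (asc x' y' z).

Definition iso2 {a b : ob B} (f g : hom B a b) : Prop :=
  exists (θ : cell f g) (θ' : cell g f), vcomp θ' θ = vid f /\ vcomp θ θ' = vid g.

Definition is_equivalence {a b : ob B} (f : hom B a b) : Prop :=
  exists g : hom B b a, iso2 (g ⊚ f) (idm a) /\ iso2 (f ⊚ g) (idm b).

(* is_adjunction f g : f is left adjoint to g (unit η, counit ε, triangle identities) *)
Definition is_adjunction {a b : ob B} (f : hom B b a) (g : hom B a b) : Prop :=
  exists (η : cell (idm b) (g ⊚ f)) (ε : cell (f ⊚ g) (idm a)),
    cast (rid f) (lid f) (vcomp (wr ε f) (cast eq_refl (eq_sym (asc f g f)) (wl f η)))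
      = vid f /\
    cast (lid g) (rid g) (vcomp (wl g ε) (cast eq_refl (asc g f g) (wr η g)))
      = vid g.

Definition has_left_adjoint {a b : ob B} (l : hom B a b) : Prop :=
  exists f : hom B b a, is_adjunction f l.
Definition has_right_adjoint {a b : ob B} (l : hom B a b) : Prop :=
  exists r : hom B b a, is_adjunction l r.

Section Opcomma.
Context {e b : ob B} (p : hom B e b).

Record OTriple (y : ob B) : Type := MkOTriple {
  t0 : hom B b y; t1 : hom B b y; tb : cell (t1 ⊚ p) (t0 ⊚ p) }.
Arguments t0 {y}. Arguments t1 {y}. Arguments tb {y}.

Definition OTripleMor {y : ob B} (t t' : OTriple y)
  (ξ0 : cell (t0 t) (t0 t')) (ξ1 : cell (t1 t) (t1 t')) : Prop :=
  vcomp (wr ξ0 p) (tb t) = vcomp (tb t') (wr ξ1 p).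

Definition otriple_of {P y : ob B} (d0 d1 : hom B b P) (α : cell (d1 ⊚ p) (d0 ⊚ p))
  (h : hom B P y) : OTriple y :=
  MkOTriple y (h ⊚ d0) (h ⊚ d1) (cast (eq_sym (asc h d1 p)) (eq_sym (asc h d0 p)) (wl h α)).

Definition is_opcomma (P : ob B) (d0 d1 : hom B b P) (α : cell (d1 ⊚ p) (d0 ⊚ p)) : Prop :=
  forall y : ob B,
    (forall t : OTriple y, exists! h : hom B P y, otriple_of d0 d1 α h = t) /\
    (forall (h h' : hom B P y) (ξ0 : cell (h ⊚ d0) (h' ⊚ d0)) (ξ1 : cell (h ⊚ d1) (h' ⊚ d1)),
        OTripleMor (otriple_of d0 d1 α h) (otriple_of d0 d1 α h') ξ0 ξ1 ->
        exists! ξ : cell h h', wr ξ d0 = ξ0 /\ wr ξ d1 = ξ1).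
End Opcomma.

Section Pushout.
Context {s x0 x1 : ob B} (f0 : hom B s x0) (f1 : hom B s x1).

Record PPair (y : ob B) : Type := MkPPair {
  k0 : hom B x0 y; k1 : hom B x1 y; ke : k0 ⊚ f0 = k1 ⊚ f1 }.
Arguments k0 {y}. Arguments k1 {y}. Arguments ke {y}.

Definition PPairMor {y : ob B} (t t' : PPair y)
  (ξ0 : cell (k0 t) (k0 t')) (ξ1 : cell (k1 t) (k1 t')) : Prop :=
  cast (ke t) (ke t') (wr ξ0 f0) = wr ξ1 f1.

Definition ppair_of {Q y : ob B} (q0 : hom B x0 Q) (q1 : hom B x1 Q)
  (E : q0 ⊚ f0 = q1 ⊚ f1) (k : hom B Q y) : PPair y :=
  MkPPair y (k ⊚ q0) (k ⊚ q1)
    (eq_trans (asc k q0 f0) (eq_trans (f_equal (comp k) E) (eq_sym (asc k q1 f1)))).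

Definition is_pushout (Q : ob B) (q0 : hom B x0 Q) (q1 : hom B x1 Q)
  (E : q0 ⊚ f0 = q1 ⊚ f1) : Prop :=
  forall y : ob B,
    (forall t : PPair y, exists! k : hom B Q y, k ⊚ q0 = k0 t /\ k ⊚ q1 = k1 t) /\
    (forall (k k' : hom B Q y) (ξ0 : cell (k ⊚ q0) (k' ⊚ q0)) (ξ1 : cell (k ⊚ q1) (k' ⊚ q1)),
        PPairMor (ppair_of q0 q1 E k) (ppair_of q0 q1 E k') ξ0 ξ1 ->
        exists! ξ : cell k k', wr ξ q0 = ξ0 /\ wr ξ q1 = ξ1).
End Pushout.

(* P = b↑_p b (with δ^0 = ck_d0, δ^1 = ck_d1, α = ck_α),
   Q = b↑_p b↑_p b the pushout of (δ^0, δ^1) with D^0, D^2, D^2 δ^0 = D^0 δ^1;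
   D^1 and s^0 are the (unique, by the opcomma property) 1-cells described
   in the paper, recorded together with their defining equations. *)
Record CokernelDiagram {e b : ob B} (p : hom B e b) : Type := MkCokernelDiagram {
  ck_P : ob B;
  ck_d0 : hom B b ck_P;
  ck_d1 : hom B b ck_P;
  ck_α : cell (ck_d1 ⊚ p) (ck_d0 ⊚ p);
  ck_opcomma : is_opcomma p ck_P ck_d0 ck_d1 ck_α;
  ck_Q : ob B;
  ck_D0 : hom B ck_P ck_Q;
  ck_D2 : hom B ck_P ck_Q;
  ck_DE : ck_D2 ⊚ ck_d0 = ck_D0 ⊚ ck_d1;
  ck_pushout : is_pushout ck_d0 ck_d1 ck_Q ck_D2 ck_D0 ck_DE;
  ck_D1 : hom B ck_P ck_Q;
  ck_D1e1 : ck_D1 ⊚ ck_d1 = ck_D2 ⊚ ck_d1;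
  ck_D1e0 : ck_D1 ⊚ ck_d0 = ck_D0 ⊚ ck_d0;
  ck_D1α : cast (reassoc2 ck_D1e1 p) (reassoc2 ck_D1e0 p) (wl ck_D1 ck_α)
           = vcomp (wl ck_D0 ck_α) (cast eq_refl (reassoc2 ck_DE p) (wl ck_D2 ck_α));
  ck_s0 : hom B ck_P b;
  ck_s0e0 : ck_s0 ⊚ ck_d0 = idm b;
  ck_s0e1 : ck_s0 ⊚ ck_d1 = idm b;
  ck_s0α : cast (eq_trans (reassoc1 ck_s0e1 p) (lid p))
                (eq_trans (reassoc1 ck_s0e0 p) (lid p)) (wl ck_s0 ck_α) = vid p
}.

Arguments ck_P {e b p} _.
Arguments ck_d0 {e b p} _.
Arguments ck_d1 {e b p} _.
Arguments ck_α {e b p} _.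
Arguments ck_opcomma {e b p} _.
Arguments ck_Q {e b p} _.
Arguments ck_D0 {e b p} _.
Arguments ck_D2 {e b p} _.
Arguments ck_DE {e b p} _.
Arguments ck_pushout {e b p} _.
Arguments ck_D1 {e b p} _.
Arguments ck_D1e1 {e b p} _.
Arguments ck_D1e0 {e b p} _.
Arguments ck_D1α {e b p} _.
Arguments ck_s0 {e b p} _.
Arguments ck_s0e0 {e b p} _.
Arguments ck_s0e1 {e b p} _.
Arguments ck_s0α {e b p} _.

Definition has_cokernel_diagram {e b : ob B} (p : hom B e b) : Prop :=
  inhabited (CokernelDiagram p).

Section Descent.
Context {e b : ob B} {p : hom B e b} (C : CokernelDiagram p).

Record DObj (y : ob B) : Type := MkDObj {
  dh : hom B y b; dβ : cell (ck_d1 C ⊚ dh) (ck_d0 C ⊚ dh) }.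
Arguments dh {y}. Arguments dβ {y}.

Definition is_desc {y : ob B} (x : DObj y) : Prop :=
  vcomp (wl (ck_D0 C) (dβ x)) (cast eq_refl (reassoc2 (ck_DE C) (dh x)) (wl (ck_D2 C) (dβ x)))
    = cast (reassoc2 (ck_D1e1 C) (dh x)) (reassoc2 (ck_D1e0 C) (dh x)) (wl (ck_D1 C) (dβ x))
  /\
  cast (eq_trans (reassoc1 (ck_s0e1 C) (dh x)) (lid (dh x)))
       (eq_trans (reassoc1 (ck_s0e0 C) (dh x)) (lid (dh x))) (wl (ck_s0 C) (dβ x))
    = vid (dh x).

Definition DMor {y : ob B} (x x' : DObj y) (ξ : cell (dh x) (dh x')) : Prop :=
  vcomp (dβ x') (wl (ck_d1 C) ξ) = vcomp (wl (ck_d0 C) ξ) (dβ x).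

Definition dobj_of {L y : ob B} (d : hom B L b) (Ψ : cell (ck_d1 C ⊚ d) (ck_d0 C ⊚ d))
  (g : hom B y L) : DObj y :=
  MkDObj y (d ⊚ g) (cast (asc (ck_d1 C) d g) (asc (ck_d0 C) d g) (wr Ψ g)).

Definition is_lax_descent (L : ob B) (d : hom B L b)
  (Ψ : cell (ck_d1 C ⊚ d) (ck_d0 C ⊚ d)) : Prop :=
  forall y : ob B,
    (forall g : hom B y L, is_desc (dobj_of d Ψ g)) /\
    (forall x : DObj y, is_desc x -> exists! g : hom B y L, dobj_of d Ψ g = x) /\
    (forall (g g' : hom B y L) (ξ : cell (d ⊚ g) (d ⊚ g')),
        DMor (dobj_of d Ψ g) (dobj_of d Ψ g') ξ ->
        exists! θ : cell g g', wl d θ = ξ).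
End Descent.

Definition is_effective_faithful {e b : ob B} (p : hom B e b) : Prop :=
  exists (C : CokernelDiagram p) (L : ob B) (d : hom B L b)
         (Ψ : cell (ck_d1 C ⊚ d) (ck_d0 C ⊚ d)),
    is_lax_descent C L d Ψ /\
    exists (pH : hom B e L) (E : d ⊚ pH = p),
      cast (eq_trans (asc (ck_d1 C) d pH) (f_equal (comp (ck_d1 C)) E))
           (eq_trans (asc (ck_d0 C) d pH) (f_equal (comp (ck_d0 C)) E)) (wr Ψ pH)
        = ck_α C
      /\ is_equivalence pH.

Record Codensity {e b : ob B} (p : hom B e b) : Type := MkCodensity {
  cd_t : hom B b b;
  cd_γ : cell (cd_t ⊚ p) p;
  cd_ran : forall (k : hom B b b) (δ : cell (k ⊚ p) p),
      exists! β : cell k cd_t, vcomp cd_γ (wr β p) = δ;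
  cd_m : cell (cd_t ⊚ cd_t) cd_t;
  cd_mE : cast (asc cd_t cd_t p) eq_refl (vcomp cd_γ (wr cd_m p))
          = vcomp cd_γ (wl cd_t cd_γ);
  cd_η : cell (idm b) cd_t;
  cd_ηE : cast (lid p) eq_refl (vcomp cd_γ (wr cd_η p)) = vid p
}.

Arguments cd_t {e b p} _.
Arguments cd_γ {e b p} _.
Arguments cd_ran {e b p} _.
Arguments cd_m {e b p} _.
Arguments cd_mE {e b p} _.
Arguments cd_η {e b p} _.
Arguments cd_ηE {e b p} _.

Section EM.
Context {e b : ob B} {p : hom B e b} (T : Codensity p).

Record AObj (y : ob B) : Type := MkAObj {
  ah : hom B y b; aβ : cell (cd_t T ⊚ ah) ah }.
Arguments ah {y}. Arguments aβ {y}.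

Definition is_alg {y : ob B} (x : AObj y) : Prop :=
  cast (asc (cd_t T) (cd_t T) (ah x)) eq_refl (vcomp (aβ x) (wr (cd_m T) (ah x)))
    = vcomp (aβ x) (wl (cd_t T) (aβ x))
  /\ cast (lid (ah x)) eq_refl (vcomp (aβ x) (wr (cd_η T) (ah x))) = vid (ah x).

Definition AMor {y : ob B} (x x' : AObj y) (ξ : cell (ah x) (ah x')) : Prop :=
  vcomp ξ (aβ x) = vcomp (aβ x') (wl (cd_t T) ξ).

Definition aobj_of {bT y : ob B} (u : hom B bT b) (μ : cell (cd_t T ⊚ u) u)
  (g : hom B y bT) : AObj y :=
  MkAObj y (u ⊚ g) (cast (asc (cd_t T) u g) eq_refl (wr μ g)).

Definition is_EM (bT : ob B) (u : hom B bT b) (μ : cell (cd_t T ⊚ u) u) : Prop :=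
  forall y : ob B,
    (forall g : hom B y bT, is_alg (aobj_of u μ g)) /\
    (forall x : AObj y, is_alg x -> exists! g : hom B y bT, aobj_of u μ g = x) /\
    (forall (g g' : hom B y bT) (ξ : cell (u ⊚ g) (u ⊚ g')),
        AMor (aobj_of u μ g) (aobj_of u μ g') ξ ->
        exists! θ : cell g g', wl u θ = ξ).
End EM.

Definition is_monadic {e b : ob B} (p : hom B e b) : Prop :=
  exists (T : Codensity p) (bT : ob B) (u : hom B bT b) (μ : cell (cd_t T ⊚ u) u),
    is_EM T bT u μ /\
    exists (pT : hom B e bT) (E : u ⊚ pT = p),
      cast (eq_trans (asc (cd_t T) u pT) (f_equal (comp (cd_t T)) E)) E (wr μ pT)
        = cd_γ T
      /\ is_equivalence pT.

End Notions.

Definition has_kernel_diagram (A : TwoCat) {a b : ob A} (l : hom A a b) : Prop :=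
  @has_cokernel_diagram (op A) b a l.
Definition is_effective_opfaithful (A : TwoCat) {a b : ob A} (l : hom A a b) : Prop :=
  @is_effective_faithful (op A) b a l.
Definition is_kleisli (A : TwoCat) {a b : ob A} (l : hom A a b) : Prop :=
  @is_monadic (op A) b a l.
Definition is_cokleisli (A : TwoCat) {a b : ob A} (l : hom A a b) : Prop :=
  @is_monadic (coop A) b a l.

From Stdlib Require Import ClassicalEpsilon ProofIrrelevance.

(* If p has a left adjoint f, then t = p f is the codensity monad of p.  The opcomma object
   b↑_p b classifies the triple (1, t, γ) by a 1-cell r : b↑_p b -> b, and the adjunction
   provides a 2-cell κ : δ^1 ⇒ δ^0 t.  Whiskering by r turns a descent datum (h, β) into a
   t-algebra (h, r β), and an algebra (h, a) gives back the descent datum (δ^0 a)·(κ h); the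
   two constructions are inverse and preserve morphisms, so a lax descent object of p is the
   same thing as an Eilenberg-Moore object, with the same comparison 1-cell from e.  Moreover
   a monadic p has a left adjoint: the free algebra on t is left adjoint to u, and p = u p^T
   with p^T an equivalence.  The corollary is this statement read in A^op (Kleisli) and in A^coop
   (co-Kleisli): reversing 2-cells preserves cokernel diagrams and effective faithfulness,
   while passing to A^op or A^coop exchanges the sides of adjunctions as needed. *)

Set Implicit Arguments.

Lemma unique_iff {A : Type} {P Q : A -> Prop} :
  (exists! x, P x) -> (forall x, P x <-> Q x) -> exists! x, Q x.
Proof. intros [x [Px U]] PQ. exists x. split; [now apply PQ | intros x' Qx'; now apply U, PQ]. Qed.

(** * Packed 2-cells *)

(* Equations between 2-cells whose boundaries agree only up to the 2-category axioms are
   stated between 2-cells packed with their boundaries, which makes every cast disappear. *)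
Section PackedCells.
Context {B : TwoCat}.

Record PCell (a b : ob B) : Type := Pack { src : hom B a b; tgt : hom B a b; body : cell src tgt }.
Arguments Pack {a b src tgt} body.

Lemma Pack_inj {a b : ob B} {f g : hom B a b} (x y : cell f g) : Pack x = Pack y -> x = y.
Proof.
  intro E.
  apply (inj_pair2 _ (fun fg : hom B a b * hom B a b => cell (fst fg) (snd fg)) (f, g)).
  exact (f_equal (fun X => existT (fun fg : hom B a b * hom B a b => cell (fst fg) (snd fg))
                                  (src X, tgt X) (body X)) E).
Qed.

Lemma Pack_cast {a b : ob B} {f f' g g' : hom B a b} (e1 : f = f') (e2 : g = g') (x : cell f g) :
  Pack (cast e1 e2 x) = Pack x.
Proof. destruct e1, e2; reflexivity. Qed.

Lemma cast_eq_of_Pack {a b : ob B} {f f' g g' : hom B a b} (e1 : f = f') (e2 : g = g')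
  (x : cell f g) (y : cell f' g') : Pack x = Pack y -> cast e1 e2 x = y.
Proof. intro E. apply Pack_inj. rewrite Pack_cast. exact E. Qed.

Definition pvid {a b : ob B} (f : hom B a b) : PCell a b := Pack (vid f).

(* Total vertical composition: junk value [X] when the boundaries do not match. *)
Definition pvcomp {a b : ob B} (X Y : PCell a b) : PCell a b :=
  match excluded_middle_informative (src X = tgt Y) with
  | left e => Pack (vcomp (body X) (cast eq_refl (eq_sym e) (body Y)))
  | right _ => X
  end.

Definition pwl {a b c : ob B} (h : hom B b c) (X : PCell a b) : PCell a c := Pack (wl h (body X)).
Definition pwr {a b c : ob B} (X : PCell b c) (h : hom B a b) : PCell a c := Pack (wr (body X) h).

End PackedCells.

Arguments Pack {B a b src tgt} body.

Notation "X ∙ Y" := (pvcomp X Y) (at level 45, right associativity).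
Notation "h ◁ X" := (pwl h X) (at level 41, right associativity).
Notation "X ▷ h" := (pwr X h) (at level 42, left associativity).

Section PackedCalculus.
Context {B : TwoCat}.
Let AX := tc_ax B.

Lemma pvcomp_Pack {a b : ob B} {f g h : hom B a b} (x : cell g h) (y : cell f g) :
  Pack x ∙ Pack y = Pack (vcomp x y).
Proof.
  unfold pvcomp. destruct (excluded_middle_informative _) as [e|n]; [|now destruct n].
  cbn in e. now rewrite (UIP _ _ _ e eq_refl).
Qed.

Lemma src_pvcomp {a b : ob B} (X Y : PCell a b) : src X = tgt Y -> src (X ∙ Y) = src Y.
Proof. intro e. unfold pvcomp. now destruct (excluded_middle_informative _). Qed.

Lemma tgt_pvcomp {a b : ob B} (X Y : PCell a b) : tgt (X ∙ Y) = tgt X.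
Proof. unfold pvcomp. now destruct (excluded_middle_informative _). Qed.

Lemma pvcompA {a b : ob B} (X Y Z : PCell a b) : src X = tgt Y -> src Y = tgt Z ->
  (X ∙ Y) ∙ Z = X ∙ (Y ∙ Z).
Proof.
  destruct X as [f g x], Y as [f' g' y], Z as [f'' g'' z]; cbn; intros <- <-.
  rewrite !pvcomp_Pack. f_equal. apply (vassoc _ AX).
Qed.

Lemma pvcomp_idl {a b : ob B} (X : PCell a b) f : f = tgt X -> pvid f ∙ X = X.
Proof.
  destruct X as [g h x]; cbn; intros ->. unfold pvid. rewrite pvcomp_Pack.
  f_equal. apply (vidl _ AX).
Qed.

Lemma pvcomp_idr {a b : ob B} (X : PCell a b) f : f = src X -> X ∙ pvid f = X.
Proof.
  destruct X as [g h x]; cbn; intros ->. unfold pvid. rewrite pvcomp_Pack.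
  f_equal. apply (vidr _ AX).
Qed.

Lemma pwl_pvcomp {a b c : ob B} (h : hom B b c) (X Y : PCell a b) : src X = tgt Y ->
  h ◁ (X ∙ Y) = (h ◁ X) ∙ (h ◁ Y).
Proof.
  destruct X as [f g x], Y as [f' g' y]; cbn; intros <-.
  rewrite !pvcomp_Pack. unfold pwl; cbn. rewrite pvcomp_Pack. f_equal.
  unfold wl. rewrite <- (interchange _ AX), (vidl _ AX). reflexivity.
Qed.

Lemma pwr_pvcomp {a b c : ob B} (X Y : PCell b c) (h : hom B a b) : src X = tgt Y ->
  (X ∙ Y) ▷ h = (X ▷ h) ∙ (Y ▷ h).
Proof.
  destruct X as [f g x], Y as [f' g' y]; cbn; intros <-.
  rewrite !pvcomp_Pack. unfold pwr; cbn. rewrite pvcomp_Pack. f_equal.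
  unfold wr. rewrite <- (interchange _ AX), (vidl _ AX). reflexivity.
Qed.

Lemma pwl_pvid {a b c : ob B} (h : hom B b c) (f : hom B a b) : h ◁ pvid f = pvid (h ⊚ f).
Proof. unfold pwl, pvid; cbn. f_equal. apply (hvid _ AX). Qed.

Lemma pwr_pvid {a b c : ob B} (f : hom B b c) (h : hom B a b) : pvid f ▷ h = pvid (f ⊚ h).
Proof. unfold pwr, pvid; cbn. f_equal. apply (hvid _ AX). Qed.

Lemma pwl_comp {a b c d : ob B} (h : hom B c d) (g : hom B b c) (X : PCell a b) :
  (h ⊚ g) ◁ X = h ◁ g ◁ X.
Proof.
  destruct X as [f f' x]. unfold pwl, wl; cbn. rewrite <- (hvid _ AX).
  rewrite <- (hassoc _ AX _ _ _ _ _ _ _ _ _ _ (vid h) (vid g) x), Pack_cast. reflexivity.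
Qed.

Lemma pwr_comp {a b c d : ob B} (X : PCell c d) (g : hom B b c) (f : hom B a b) :
  X ▷ (g ⊚ f) = X ▷ g ▷ f.
Proof.
  destruct X as [h h' x]. unfold pwr, wr; cbn. rewrite <- (hvid _ AX).
  rewrite <- (hassoc _ AX _ _ _ _ _ _ _ _ _ _ x (vid g) (vid f)), Pack_cast. reflexivity.
Qed.

Lemma pwl_pwr {a b c d : ob B} (h : hom B c d) (X : PCell b c) (f : hom B a b) :
  h ◁ (X ▷ f) = h ◁ X ▷ f.
Proof.
  destruct X as [g g' x]. unfold pwl, pwr, wl, wr; cbn.
  rewrite <- (hassoc _ AX _ _ _ _ _ _ _ _ _ _ (vid h) x (vid f)), Pack_cast. reflexivity.
Qed.

Lemma pwl_idm {a b : ob B} (X : PCell a b) : idm b ◁ X = X.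
Proof.
  destruct X as [f g x]. unfold pwl, wl; cbn.
  rewrite <- (Pack_cast (idl _ AX _ _ f) (idl _ AX _ _ g)), (hidl _ AX). reflexivity.
Qed.

Lemma pwr_idm {a b : ob B} (X : PCell a b) : X ▷ idm a = X.
Proof.
  destruct X as [f g x]. unfold pwr, wr; cbn.
  rewrite <- (Pack_cast (idr _ AX _ _ f) (idr _ AX _ _ g)), (hidr _ AX). reflexivity.
Qed.

Lemma pinterchange {a b c : ob B} (X : PCell b c) (Y : PCell a b) :
  (X ▷ tgt Y) ∙ (src X ◁ Y) = (tgt X ◁ Y) ∙ (X ▷ src Y).
Proof.
  destruct X as [f g x], Y as [f' g' y]. unfold pwl, pwr, wl, wr; cbn.
  rewrite !pvcomp_Pack, <- !(interchange _ AX), !(vidl _ AX), !(vidr _ AX). reflexivity.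
Qed.

Lemma Pack_vcomp {a b : ob B} {f g h : hom B a b} (x : cell g h) (y : cell f g) :
  Pack (vcomp x y) = Pack x ∙ Pack y.
Proof. symmetry. apply pvcomp_Pack. Qed.

Lemma Pack_wl {a b c : ob B} (k : hom B b c) {f g : hom B a b} (x : cell f g) :
  Pack (wl k x) = k ◁ Pack x.
Proof. reflexivity. Qed.

Lemma Pack_wr {a b c : ob B} {f g : hom B b c} (x : cell f g) (k : hom B a b) :
  Pack (wr x k) = Pack x ▷ k.
Proof. reflexivity. Qed.

Lemma Pack_vid {a b : ob B} (f : hom B a b) : Pack (vid f) = pvid f.
Proof. reflexivity. Qed.

Lemma Pack_hcomp {a b c : ob B} {f f' : hom B b c} {g g' : hom B a b}
  (x : cell f f') (y : cell g g') :
  Pack (hcomp x y) = (Pack x ▷ g') ∙ (f ◁ Pack y).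
Proof.
  unfold pwl, pwr, wl, wr; cbn. rewrite pvcomp_Pack, <- (interchange _ AX).
  rewrite (vidl _ AX), (vidr _ AX). reflexivity.
Qed.

Lemma PCell_of_boundary {a b : ob B} (X : PCell a b) (f g : hom B a b) :
  src X = f -> tgt X = g -> exists x : cell f g, Pack x = X.
Proof. destruct X as [f' g' x]; cbn; intros <- <-. now exists x. Qed.

End PackedCalculus.

Arguments PCell_of_boundary {B a b} X f g.

Ltac pack := repeat rewrite ?Pack_cast, ?Pack_vcomp, ?Pack_wl, ?Pack_wr, ?Pack_vid, ?Pack_hcomp.
Ltac pack_in H :=
  repeat rewrite ?Pack_cast, ?Pack_vcomp, ?Pack_wl, ?Pack_wr, ?Pack_vid, ?Pack_hcomp in H.
Ltac to_packed := apply Pack_inj; pack.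
Ltac to_packed_in H := apply (f_equal (fun x => Pack x)) in H; pack_in H.

Lemma comp_reassoc {B : TwoCat} {b c d : ob B} {x : hom B c d} {y : hom B b c} {w : hom B b d}
  (E : x ⊚ y = w) [a : ob B] (z : hom B a b) : x ⊚ (y ⊚ z) = w ⊚ z.
Proof. now rewrite <- asc, E. Qed.

Create HintDb homeq.
Global Hint Rewrite @asc @lid @rid : homeq.

(* [bnd] proves boundary conditions [src X = tgt Y] by computing both sides and normalising
   the 1-cells.  [nrm] brings packed expressions to a right-nested vertical composite of
   whiskered cells, whiskering by composite 1-cells fused.  [rewrite_chain E] also rewrites
   with an [E] whose left side is a sub-chain of such a composite. *)
Ltac bnd_with tac :=
  repeat (first [rewrite tgt_pvcomp | rewrite src_pvcomp by bnd_with tac]);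
  cbn [src tgt pwl pwr pvid body];
  try (autorewrite with homeq; tac; autorewrite with homeq; reflexivity).
Ltac bnd := bnd_with idtac.

Ltac nrm_with tac := repeat first
  [ rewrite pwl_pvcomp by bnd_with tac | rewrite pwr_pvcomp by bnd_with tac
  | rewrite pwl_pvid | rewrite pwr_pvid | rewrite <- pwl_comp | rewrite <- pwr_comp
  | rewrite pwl_pwr | rewrite pwl_idm | rewrite pwr_idm | rewrite pvcompA by bnd_with tac
  | rewrite pvcomp_idl by bnd_with tac | rewrite pvcomp_idr by bnd_with tac
  | progress (autorewrite with homeq) ].
Ltac nrm := nrm_with idtac.
Ltac nrm_in_with tac E := repeat first
  [ rewrite pwl_pvcomp in E by bnd_with tac | rewrite pwr_pvcomp in E by bnd_with tac
  | rewrite pwl_pvid in E | rewrite pwr_pvid in E | rewrite <- pwl_comp in E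
  | rewrite <- pwr_comp in E | rewrite pwl_pwr in E | rewrite pwl_idm in E | rewrite pwr_idm in E
  | rewrite pvcompA in E by bnd_with tac
  | rewrite pvcomp_idl in E by bnd_with tac | rewrite pvcomp_idr in E by bnd_with tac
  | progress (autorewrite with homeq in E) ].
Ltac nrm_in E := nrm_in_with idtac E.

Ltac assoc_prefix L := match L with
  | ?X ∙ (?Y ∙ ?Z) => assoc_prefix (Y ∙ Z); rewrite <- (pvcompA X (Y ∙ Z)) by bnd
  | ?X ∙ ?Y => rewrite <- (pvcompA X Y) by bnd
  end.
Ltac rewrite_chain E := match type of E with
  ?L = _ => first [rewrite E | assoc_prefix L; rewrite E] end; nrm.
Ltac rewrite_chain_rev E := match type of E with
  _ = ?L => first [rewrite <- E | assoc_prefix L; rewrite <- E] end; nrm.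

Tactic Notation "interchange" constr(X) constr(Y) "as" ident(N) :=
  pose proof (pinterchange X Y) as N; cbn [src tgt pwl pwr pvid body] in N.

(** * Universal properties in packed form *)

Section UniversalProperties.
Context {B : TwoCat}.

Lemma OTriple_eq_iff {e b : ob B} (p : hom B e b) y (h0 h0' h1 h1' : hom B b y)
  (x : cell (h1 ⊚ p) (h0 ⊚ p)) (x' : cell (h1' ⊚ p) (h0' ⊚ p)) :
  MkOTriple p y h0 h1 x = MkOTriple p y h0' h1' x' <-> h0 = h0' /\ h1 = h1' /\ Pack x = Pack x'.
Proof.
  split.
  - intro E. repeat split.
    + exact (f_equal (t0 p y) E).
    + exact (f_equal (t1 p y) E).
    + exact (f_equal (fun t => Pack (tb p y t)) E).
  - intros (<- & <- & E). apply Pack_inj in E. now subst.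
Qed.

Context {e b : ob B} (p : hom B e b) {P : ob B} (d0 d1 : hom B b P)
  (α : cell (d1 ⊚ p) (d0 ⊚ p)) (Hoc : is_opcomma p P d0 d1 α).

Lemma opcomma_1cell y (h0 h1 : hom B b y) (X : PCell e y) :
  src X = h1 ⊚ p -> tgt X = h0 ⊚ p ->
  exists h : hom B P y, h ⊚ d0 = h0 /\ h ⊚ d1 = h1 /\ h ◁ Pack α = X.
Proof.
  destruct X as [f g x]; cbn; intros -> ->.
  destruct (proj1 (Hoc y) (MkOTriple p y h0 h1 x)) as [h [Hh _]].
  apply OTriple_eq_iff in Hh as (H0 & H1 & Hα). rewrite Pack_cast in Hα.
  now exists h.
Qed.

Lemma opcomma_2cell y (h h' : hom B P y) (X0 X1 : PCell b y) :
  src X0 = h ⊚ d0 -> tgt X0 = h' ⊚ d0 -> src X1 = h ⊚ d1 -> tgt X1 = h' ⊚ d1 ->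
  (X0 ▷ p) ∙ (h ◁ Pack α) = (h' ◁ Pack α) ∙ (X1 ▷ p) ->
  exists ξ : cell h h', Pack ξ ▷ d0 = X0 /\ Pack ξ ▷ d1 = X1.
Proof.
  destruct X0 as [f0 g0 x0], X1 as [f1 g1 x1]; cbn; intros -> -> -> -> Hc.
  destruct (proj2 (Hoc y) h h' x0 x1) as [ξ [[H0 H1] _]].
  - unfold OTripleMor, otriple_of; cbn. to_packed. exact Hc.
  - exists ξ. now rewrite <- H0, <- H1.
Qed.

End UniversalProperties.

Lemma pushout_1cell {B : TwoCat} {s x0 x1 : ob B} (f0 : hom B s x0) (f1 : hom B s x1) Q q0 q1 E
  (Hp : is_pushout f0 f1 Q q0 q1 E) y (k0 : hom B x0 y) (k1 : hom B x1 y) :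
  k0 ⊚ f0 = k1 ⊚ f1 -> exists k : hom B Q y, k ⊚ q0 = k0 /\ k ⊚ q1 = k1.
Proof.
  intro Ek. destruct (proj1 (Hp y) (MkPPair f0 f1 y k0 k1 Ek)) as [k [[H0 H1] _]].
  now exists k.
Qed.

Lemma is_adjunction_packed {B : TwoCat} {a b : ob B} (f : hom B b a) (g : hom B a b) :
  is_adjunction f g <-> exists (η : cell (idm b) (g ⊚ f)) (ε : cell (f ⊚ g) (idm a)),
    (Pack ε ▷ f) ∙ (f ◁ Pack η) = pvid f /\ (g ◁ Pack ε) ∙ (Pack η ▷ g) = pvid g.
Proof.
  unfold is_adjunction.
  split; intros (η & ε & X & Y); exists η, ε;
    [to_packed_in X; to_packed_in Y | split; to_packed]; auto.
Qed.

(** * Codensity monads, algebras and descent data *)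

Global Hint Rewrite @ck_DE @ck_D1e1 @ck_D1e0 @ck_s0e0 @ck_s0e1
  (fun B e b p C => comp_reassoc (@ck_DE B e b p C))
  (fun B e b p C => comp_reassoc (@ck_D1e1 B e b p C))
  (fun B e b p C => comp_reassoc (@ck_D1e0 B e b p C))
  (fun B e b p C => comp_reassoc (@ck_s0e0 B e b p C))
  (fun B e b p C => comp_reassoc (@ck_s0e1 B e b p C)) : homeq.

Section CodensityDescent.
Context {B : TwoCat} {e b : ob B} (p : hom B e b) (C : CokernelDiagram p) (T : Codensity p).
Local Notation t := (cd_t p T).
Local Notation γ := (Pack (cd_γ p T)).
Local Notation m := (Pack (cd_m p T)).
Local Notation η := (Pack (cd_η p T)).
Local Notation P := (ck_P p C).
Local Notation d0 := (ck_d0 p C).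
Local Notation d1 := (ck_d1 p C).
Local Notation α := (Pack (ck_α p C)).
Local Notation D0 := (ck_D0 p C).
Local Notation D1 := (ck_D1 p C).
Local Notation D2 := (ck_D2 p C).
Local Notation s0 := (ck_s0 p C).
Local Notation opc := (ck_opcomma p C).
Local Notation pushout := (ck_pushout p C).

Lemma codensity_mult : γ ∙ (m ▷ p) = γ ∙ (t ◁ γ).
Proof. pose proof (cd_mE p T) as E. to_packed_in E. exact E. Qed.

Lemma codensity_unit : γ ∙ (η ▷ p) = pvid p.
Proof. pose proof (cd_ηE p T) as E. to_packed_in E. exact E. Qed.

Lemma codensity_cell_unique (X Y : PCell b b) : src X = src Y -> tgt X = t -> tgt Y = t ->
  γ ∙ (X ▷ p) = γ ∙ (Y ▷ p) -> X = Y.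
Proof.
  destruct X as [k k' x], Y as [l l' y]; cbn. intros <- -> -> E.
  rewrite <- !Pack_wr, !pvcomp_Pack in E. apply Pack_inj in E.
  destruct (cd_ran p T k (vcomp (cd_γ p T) (wr x p))) as [β [_ U]].
  rewrite <- (U x eq_refl), <- (U y (eq_sym E)). reflexivity.
Qed.

Lemma codensity_unit_r : m ∙ (t ◁ η) = pvid t.
Proof.
  apply codensity_cell_unique; try bnd.
  pose proof (f_equal (pwl t) codensity_unit) as U. nrm_in U.
  nrm. rewrite_chain codensity_mult. rewrite_chain U. reflexivity.
Qed.

Lemma codensity_unit_l : m ∙ (η ▷ t) = pvid t.
Proof.
  apply codensity_cell_unique; try bnd.
  nrm. rewrite_chain codensity_mult. interchange η γ as N. nrm_in N. rewrite_chain_rev N.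
  rewrite_chain codensity_unit. reflexivity.
Qed.

Lemma codensity_assoc : m ∙ (t ◁ m) = m ∙ (m ▷ t).
Proof.
  apply codensity_cell_unique; try bnd.
  pose proof (f_equal (pwl t) codensity_mult) as Mt. nrm_in Mt.
  nrm. rewrite_chain codensity_mult. rewrite_chain Mt.
  rewrite_chain codensity_mult. interchange m γ as N. nrm_in N. rewrite_chain_rev N.
  rewrite_chain codensity_mult. reflexivity.
Qed.

Lemma cokernel_D1_α : D1 ◁ α = (D0 ◁ α) ∙ (D2 ◁ α).
Proof. pose proof (ck_D1α p C) as E. to_packed_in E. exact E. Qed.

Lemma cokernel_s0_α : s0 ◁ α = pvid p.
Proof. pose proof (ck_s0α p C) as E. to_packed_in E. exact E. Qed.

Section FixedDomain.
Context {y : ob B}.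

Lemma AObj_eq_iff (h h' : hom B y b) (a : cell (t ⊚ h) h) (a' : cell (t ⊚ h') h') :
  MkAObj T y h a = MkAObj T y h' a' <-> h = h' /\ Pack a = Pack a'.
Proof.
  split.
  - intro E. split; [exact (f_equal (ah T y) E) | exact (f_equal (fun x => Pack (aβ T y x)) E)].
  - intros [<- E]. apply Pack_inj in E. now subst.
Qed.

Lemma DObj_eq_iff (h h' : hom B y b) (β : cell (d1 ⊚ h) (d0 ⊚ h)) (β' : cell (d1 ⊚ h') (d0 ⊚ h')) :
  MkDObj C y h β = MkDObj C y h' β' <-> h = h' /\ Pack β = Pack β'.
Proof.
  split.
  - intro E. split; [exact (f_equal (dh C y) E) | exact (f_equal (fun x => Pack (dβ C y x)) E)].
  - intros [<- E]. apply Pack_inj in E. now subst.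
Qed.

Lemma is_alg_packed (h : hom B y b) (a : cell (t ⊚ h) h) :
  is_alg T (MkAObj T y h a) <->
  Pack a ∙ (m ▷ h) = Pack a ∙ (t ◁ Pack a) /\ Pack a ∙ (η ▷ h) = pvid h.
Proof.
  unfold is_alg; cbn [ah aβ].
  split; intros [X Y]; [to_packed_in X; to_packed_in Y | split; to_packed]; auto.
Qed.

Lemma is_desc_packed (h : hom B y b) (β : cell (d1 ⊚ h) (d0 ⊚ h)) :
  is_desc C (MkDObj C y h β) <->
  (D0 ◁ Pack β) ∙ (D2 ◁ Pack β) = D1 ◁ Pack β /\ s0 ◁ Pack β = pvid h.
Proof.
  unfold is_desc; cbn [dh dβ].
  split; intros [X Y]; [to_packed_in X; to_packed_in Y | split; to_packed]; auto.
Qed.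

Lemma aobj_of_eq_iff {L} (u : hom B L b) (μ : cell (t ⊚ u) u) (g : hom B y L)
  (h : hom B y b) (a : cell (t ⊚ h) h) :
  aobj_of T u μ g = MkAObj T y h a <-> u ⊚ g = h /\ Pack μ ▷ g = Pack a.
Proof. unfold aobj_of. rewrite AObj_eq_iff, Pack_cast. reflexivity. Qed.

Lemma dobj_of_eq_iff {L} (d : hom B L b) (Ψ : cell (d1 ⊚ d) (d0 ⊚ d)) (g : hom B y L)
  (h : hom B y b) (β : cell (d1 ⊚ h) (d0 ⊚ h)) :
  dobj_of C d Ψ g = MkDObj C y h β <-> d ⊚ g = h /\ Pack Ψ ▷ g = Pack β.
Proof. unfold dobj_of. rewrite DObj_eq_iff, Pack_cast. reflexivity. Qed.

Lemma AMor_aobj_of_packed {L} (u : hom B L b) (μ : cell (t ⊚ u) u) (g g' : hom B y L)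
  (ξ : cell (u ⊚ g) (u ⊚ g')) :
  AMor T (aobj_of T u μ g) (aobj_of T u μ g') ξ <->
  Pack ξ ∙ (Pack μ ▷ g) = (Pack μ ▷ g') ∙ (t ◁ Pack ξ).
Proof. unfold AMor, aobj_of; cbn. split; intro X; [to_packed_in X | to_packed]; exact X. Qed.

Lemma DMor_dobj_of_packed {L} (d : hom B L b) (Ψ : cell (d1 ⊚ d) (d0 ⊚ d)) (g g' : hom B y L)
  (ξ : cell (d ⊚ g) (d ⊚ g')) :
  DMor C (dobj_of C d Ψ g) (dobj_of C d Ψ g') ξ <->
  (Pack Ψ ▷ g') ∙ (d1 ◁ Pack ξ) = (d0 ◁ Pack ξ) ∙ (Pack Ψ ▷ g).
Proof. unfold DMor, dobj_of; cbn. split; intro X; [to_packed_in X | to_packed]; exact X. Qed.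

End FixedDomain.

Section Comparison.
Context (r : hom B P b) (r_d0 : r ⊚ d0 = idm b) (r_d1 : r ⊚ d1 = t) (r_α : r ◁ α = γ).
#[local] Hint Rewrite r_d0 (comp_reassoc r_d0) r_d1 (comp_reassoc r_d1) : homeq.

Definition alg_of_desc {y} {h : hom B y b} (β : cell (d1 ⊚ h) (d0 ⊚ h)) : cell (t ⊚ h) h :=
  cast (comp_reassoc r_d1 h) (eq_trans (comp_reassoc r_d0 h) (lid h)) (wl r β).

Lemma Pack_alg_of_desc {y} (h : hom B y b) (β : cell (d1 ⊚ h) (d0 ⊚ h)) :
  Pack (alg_of_desc β) = r ◁ Pack β.
Proof. unfold alg_of_desc. now pack. Qed.

Lemma r_α_comp {z} (k : hom B b z) : (k ⊚ r) ◁ α = k ◁ γ.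
Proof. now rewrite pwl_comp, r_α. Qed.

Lemma s0_to_r : exists ρ : cell s0 r, Pack ρ ▷ d0 = pvid (idm b) /\ Pack ρ ▷ d1 = η.
Proof.
  apply (opcomma_2cell opc); try bnd.
  rewrite cokernel_s0_α, r_α, pwr_pvid, codensity_unit. apply pvcomp_idl. bnd.
Qed.

Lemma cocycle_test_mult : exists (k : hom B (ck_Q p C) b) (ζ : cell (k ⊚ D1) r),
  k ⊚ D0 = r /\ k ⊚ D2 = t ⊚ r /\ Pack ζ ▷ d0 = pvid (idm b) /\ Pack ζ ▷ d1 = m.
Proof.
  destruct (pushout_1cell pushout b (t ⊚ r) r) as [k [K2 K0]]; [bnd|].
  pose proof (comp_reassoc K0) as K0'. pose proof (comp_reassoc K2) as K2'.
  destruct (opcomma_2cell opc (k ⊚ D1) r (pvid (idm b)) m) as [ζ [Z0 Z1]];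
    try bnd_with ltac:(rewrite ?K0', ?K2').
  - rewrite pwl_comp, cokernel_D1_α, pwl_pvcomp by bnd.
    rewrite <- !pwl_comp, K0, K2, pwl_comp, r_α, <- codensity_mult, pwr_pvid.
    apply pvcomp_idl. bnd.
  - now exists k, ζ.
Qed.

Section DescentDatum.
Context {y : ob B} (h : hom B y b) (β : cell (d1 ⊚ h) (d0 ⊚ h)).

Lemma alg_of_desc_unit : s0 ◁ Pack β = pvid h -> (r ◁ Pack β) ∙ (η ▷ h) = pvid h.
Proof.
  intro Du. destruct s0_to_r as [ρ [R0 R1]].
  interchange (Pack ρ) (Pack β) as N.
  rewrite !pwr_comp, R0, R1, pwr_pvid, Du in N.
  rewrite <- N. apply pvcomp_idl. bnd.
Qed.

Lemma alg_of_desc_assoc : (D0 ◁ Pack β) ∙ (D2 ◁ Pack β) = D1 ◁ Pack β ->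
  (r ◁ Pack β) ∙ (m ▷ h) = (r ◁ Pack β) ∙ (t ◁ r ◁ Pack β).
Proof.
  intro Dc. destruct cocycle_test_mult as (k & ζ & K0 & K2 & Z0 & Z1).
  interchange (Pack ζ) (Pack β) as N.
  rewrite !pwr_comp, Z0, Z1, pwr_pvid, pvcomp_idl in N
    by bnd_with ltac:(rewrite ?(comp_reassoc K0), ?(comp_reassoc K2)).
  apply (f_equal (pwl k)) in Dc. rewrite pwl_pvcomp in Dc by bnd.
  rewrite <- !pwl_comp, K0, K2, pwl_comp in Dc. rewrite pwl_comp in N.
  now rewrite <- N, Dc, pwl_comp.
Qed.

End DescentDatum.
(* For an adjunction f ⊣ p, κ is (δ^0 φ)·(α f)·(δ^1 η) with φ : p f ⇒ t the comparison to
   the codensity monad; see [comparison_data_of_adjunction]. *)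
Context (κ : cell d1 (d0 ⊚ t)).
Local Notation K := (Pack κ).
Context (κ_r : r ◁ K = pvid t) (κ_α : (d0 ◁ γ) ∙ (K ▷ p) = α)
  (κ_D : (D0 ◁ d0 ◁ m) ∙ (D0 ◁ K ▷ t) ∙ (D2 ◁ K) = D1 ◁ K).

Lemma s0_κ : s0 ◁ K = η.
Proof.
  destruct s0_to_r as [ρ [R0 R1]].
  interchange (Pack ρ) K as N. rewrite !pwr_comp, R0, R1, pwr_pvid, κ_r in N.
  rewrite pvcomp_idl in N by bnd. rewrite N. apply pvcomp_idl. bnd.
Qed.

Definition desc_of_alg {y} {h : hom B y b} (a : cell (t ⊚ h) h) : cell (d1 ⊚ h) (d0 ⊚ h) :=
  vcomp (wl d0 a) (cast eq_refl (asc d0 t h) (wr κ h)).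

Lemma Pack_desc_of_alg {y} (h : hom B y b) (a : cell (t ⊚ h) h) :
  Pack (desc_of_alg a) = (d0 ◁ Pack a) ∙ (K ▷ h).
Proof. unfold desc_of_alg. now pack. Qed.

Lemma cocycle_test_κ : exists (k : hom B (ck_Q p C) P) (ω : cell (k ⊚ D1) (d0 ⊚ r)),
  k ⊚ D0 = idm P /\ k ⊚ D2 = d1 ⊚ r /\
  Pack ω ▷ d0 = pvid d0 /\ Pack ω ▷ d1 = (d0 ◁ m) ∙ (K ▷ t).
Proof.
  destruct (pushout_1cell pushout P (d1 ⊚ r) (idm P)) as [k [K2 K0]]; [bnd|].
  assert (K0' : forall a (z : hom B a P), k ⊚ (D0 ⊚ z) = z)
    by (intros; now rewrite <- asc, K0, lid).
  pose proof (comp_reassoc K2) as K2'.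
  destruct (opcomma_2cell opc (k ⊚ D1) (d0 ⊚ r) (pvid d0) ((d0 ◁ m) ∙ (K ▷ t))) as [ω [W0 W1]];
    try bnd_with ltac:(rewrite ?K0', ?K2').
  - assert (kα : (k ⊚ D1) ◁ α = α ∙ (d1 ◁ γ)).
    { rewrite pwl_comp, cokernel_D1_α, pwl_pvcomp by bnd.
      now rewrite <- !pwl_comp, K0, K2, pwl_idm, pwl_comp, r_α. }
    rewrite kα, pwr_pvid, pvcomp_idl by bnd. nrm. rewrite r_α_comp.
    pose proof (f_equal (pwl d0) codensity_mult) as Md0. nrm_in Md0. rewrite_chain Md0.
    interchange K γ as N. nrm_in N. rewrite_chain_rev N. rewrite_chain κ_α. reflexivity.
  - now exists k, ω.
Qed.

Section Algebra.
Context {y : ob B} (h : hom B y b).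

Lemma desc_of_alg_unit (a : cell (t ⊚ h) h) :
  Pack a ∙ (η ▷ h) = pvid h -> s0 ◁ Pack (desc_of_alg a) = pvid h.
Proof. intro Au. rewrite Pack_desc_of_alg. nrm. now rewrite s0_κ. Qed.

Lemma desc_of_alg_cocycle (a : cell (t ⊚ h) h) :
  Pack a ∙ (m ▷ h) = Pack a ∙ (t ◁ Pack a) ->
  (D0 ◁ Pack (desc_of_alg a)) ∙ (D2 ◁ Pack (desc_of_alg a)) = D1 ◁ Pack (desc_of_alg a).
Proof.
  intro Ac. rewrite !Pack_desc_of_alg. nrm.
  interchange (D0 ◁ K) (Pack a) as N. nrm_in N. rewrite_chain N.
  pose proof (f_equal (pwl (D0 ⊚ d0)) Ac) as Ac'. nrm_in Ac'. rewrite_chain_rev Ac'.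
  pose proof (f_equal (fun X => X ▷ h) κ_D) as κ_Dh. cbv beta in κ_Dh. nrm_in κ_Dh.
  rewrite_chain κ_Dh. reflexivity.
Qed.

Lemma alg_of_desc_of_alg (a : cell (t ⊚ h) h) : r ◁ Pack (desc_of_alg a) = Pack a.
Proof. rewrite Pack_desc_of_alg. nrm. rewrite κ_r. now nrm. Qed.

Lemma desc_of_alg_of_desc (β : cell (d1 ⊚ h) (d0 ⊚ h)) :
  is_desc C (MkDObj C y h β) -> Pack β = (d0 ◁ r ◁ Pack β) ∙ (K ▷ h).
Proof.
  rewrite is_desc_packed. intros [Dc Du]. pose proof (alg_of_desc_unit Du) as U.
  destruct cocycle_test_κ as (k & ω & K0 & K2 & W0 & W1).
  interchange (Pack ω) (Pack β) as N. rewrite !pwr_comp, W0, W1 in N. nrm_in N.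
  apply (f_equal (pwl k)) in Dc. rewrite pwl_pvcomp in Dc by bnd.
  rewrite <- !pwl_comp, K0, K2 in Dc. nrm_in Dc.
  rewrite <- Dc, pvcomp_idl in N by bnd.
  pose proof (f_equal (pwl d1) U) as U'. nrm_in U'.
  pose proof (f_equal (fun X => X ∙ (d1 ◁ η ▷ h)) N) as N'. cbv beta in N'. nrm_in N'.
  rewrite U' in N'. nrm_in N'. rewrite N' at 1.
  interchange K η as N2. apply (f_equal (fun X => X ▷ h)) in N2. nrm_in N2. rewrite_chain N2.
  pose proof (f_equal (fun X => d0 ◁ X ▷ h) codensity_unit_r) as R. cbv beta in R. nrm_in R.
  rewrite_chain R. reflexivity.
Qed.

End Algebra.

Lemma alg_mor_desc_mor {y} (h h' : hom B y b) (a : cell (t ⊚ h) h) (a' : cell (t ⊚ h') h')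
  (ξ : cell h h') :
  Pack ξ ∙ Pack a = Pack a' ∙ (t ◁ Pack ξ) ->
  Pack (desc_of_alg a') ∙ (d1 ◁ Pack ξ) = (d0 ◁ Pack ξ) ∙ Pack (desc_of_alg a).
Proof.
  intro Hm. rewrite !Pack_desc_of_alg. nrm.
  interchange K (Pack ξ) as N. nrm_in N. rewrite_chain N.
  apply (f_equal (pwl d0)) in Hm. nrm_in Hm. rewrite_chain_rev Hm. reflexivity.
Qed.

Lemma desc_mor_of_alg_mor {y} {h h' : hom B y b} {β : cell (d1 ⊚ h) (d0 ⊚ h)}
  {β' : cell (d1 ⊚ h') (d0 ⊚ h')} :
  is_desc C (MkDObj C y h β) -> is_desc C (MkDObj C y h' β') -> forall ξ : cell h h',
  Pack ξ ∙ (r ◁ Pack β) = (r ◁ Pack β') ∙ (t ◁ Pack ξ) ->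
  Pack β' ∙ (d1 ◁ Pack ξ) = (d0 ◁ Pack ξ) ∙ Pack β.
Proof.
  intros Hd Hd' ξ. pose proof (alg_mor_desc_mor _ _ (alg_of_desc β) (alg_of_desc β') ξ) as X.
  rewrite !Pack_desc_of_alg, !Pack_alg_of_desc in X.
  now rewrite <- (desc_of_alg_of_desc Hd), <- (desc_of_alg_of_desc Hd') in X.
Qed.

Lemma alg_of_desc_is_alg {y} (h : hom B y b) (β : cell (d1 ⊚ h) (d0 ⊚ h)) :
  is_desc C (MkDObj C y h β) -> is_alg T (MkAObj T y h (alg_of_desc β)).
Proof.
  rewrite is_desc_packed, is_alg_packed, Pack_alg_of_desc. intros [Dc Du].
  split; [now apply alg_of_desc_assoc | now apply alg_of_desc_unit].
Qed.

Lemma desc_of_alg_is_desc {y} (h : hom B y b) (a : cell (t ⊚ h) h) :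
  is_alg T (MkAObj T y h a) -> is_desc C (MkDObj C y h (desc_of_alg a)).
Proof.
  rewrite is_desc_packed, is_alg_packed. intros [Ac Au].
  split; [now apply desc_of_alg_cocycle | now apply desc_of_alg_unit].
Qed.

Lemma lax_descent_is_EM (L : ob B) (d : hom B L b) (Ψ : cell (d1 ⊚ d) (d0 ⊚ d)) :
  is_lax_descent C L d Ψ -> is_EM T L d (alg_of_desc Ψ).
Proof.
  intros Hl y. destruct (Hl y) as (Hdesc & Hobj & Hmor).
  assert (Halg : forall g, aobj_of T d (alg_of_desc Ψ) g
                          = MkAObj T y (d ⊚ g) (alg_of_desc (dβ C y (dobj_of C d Ψ g)))).
  { intro g. apply aobj_of_eq_iff. split; [reflexivity|].
    rewrite !Pack_alg_of_desc. unfold dobj_of; cbn. pack. now nrm. }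
  split; [|split].
  - intro g. rewrite Halg. exact (alg_of_desc_is_alg (Hdesc g)).
  - intros [h a] Ha. apply (unique_iff (Hobj _ (desc_of_alg_is_desc Ha))). intro g.
    rewrite dobj_of_eq_iff, aobj_of_eq_iff, Pack_alg_of_desc, Pack_desc_of_alg.
    split; intros [<- E]; split; try reflexivity.
    + rewrite <- pwl_pwr, E, <- Pack_desc_of_alg. apply alg_of_desc_of_alg.
    + pose proof (desc_of_alg_of_desc (Hdesc g)) as D. unfold dobj_of in D; cbn in D.
      pack_in D. rewrite D, <- E. now nrm.
  - intros g g' ξ Hm. apply Hmor, DMor_dobj_of_packed.
    apply AMor_aobj_of_packed in Hm. rewrite Pack_alg_of_desc, <- !pwl_pwr in Hm.
    pose proof (desc_mor_of_alg_mor (Hdesc g) (Hdesc g') ξ) as X.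
    unfold dobj_of in X; cbn in X. pack_in X. exact (X Hm).
Qed.

Lemma EM_is_lax_descent (L : ob B) (u : hom B L b) (μ : cell (t ⊚ u) u) :
  is_EM T L u μ -> is_lax_descent C L u (desc_of_alg μ).
Proof.
  intros He y. destruct (He y) as (Halg & Hobj & Hmor).
  assert (Hdesc : forall g, dobj_of C u (desc_of_alg μ) g
                           = MkDObj C y (u ⊚ g) (desc_of_alg (aβ T y (aobj_of T u μ g)))).
  { intro g. apply dobj_of_eq_iff. split; [reflexivity|].
    rewrite !Pack_desc_of_alg. unfold aobj_of; cbn. pack. now nrm. }
  split; [|split].
  - intro g. rewrite Hdesc. exact (desc_of_alg_is_desc (Halg g)).
  - intros [h β] Hd. apply (unique_iff (Hobj _ (alg_of_desc_is_alg Hd))). intro g.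
    rewrite aobj_of_eq_iff, dobj_of_eq_iff, Pack_alg_of_desc.
    split; intros [<- E]; split; try reflexivity.
    + rewrite (desc_of_alg_of_desc Hd), <- E, Pack_desc_of_alg. now nrm.
    + rewrite <- E, pwl_pwr, alg_of_desc_of_alg. reflexivity.
  - intros g g' ξ Hm. apply Hmor, AMor_aobj_of_packed.
    apply DMor_dobj_of_packed in Hm. apply (f_equal (pwl r)) in Hm.
    rewrite Pack_desc_of_alg in Hm. nrm_in Hm. rewrite κ_r in Hm. nrm_in Hm.
    now symmetry.
Qed.

End Comparison.

Section Adjunction.
Context (f : hom B b e) (η : cell (idm b) (p ⊚ f)) (ε : cell (f ⊚ p) (idm e))
  (tri_p : (p ◁ Pack ε) ∙ (Pack η ▷ p) = pvid p).

Lemma codensity_comparison : exists φ : cell (p ⊚ f) t, γ ∙ (Pack φ ▷ p) = p ◁ Pack ε.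
Proof.
  destruct (PCell_of_boundary (p ◁ Pack ε) ((p ⊚ f) ⊚ p) p) as [δ Hδ]; try bnd.
  destruct (cd_ran p T (p ⊚ f) δ) as [φ [Hφ _]].
  exists φ. rewrite <- Hδ, <- Hφ. now pack.
Qed.

Section Kappa.
Context (φ : cell (p ⊚ f) t) (Hφ : γ ∙ (Pack φ ▷ p) = p ◁ Pack ε).

Lemma codensity_comparison_mult :
  m ∙ (Pack φ ▷ t) ∙ ((p ⊚ f) ◁ Pack φ) = Pack φ ∙ (p ◁ Pack ε ▷ f).
Proof.
  apply codensity_cell_unique; try bnd.
  nrm. rewrite_chain codensity_mult.
  interchange (Pack φ) γ as N. nrm_in N. rewrite_chain_rev N.
  rewrite_chain Hφ. pose proof (f_equal (pwl (p ⊚ f)) Hφ) as Hφ'. nrm_in Hφ'. rewrite_chain Hφ'.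
  interchange (Pack ε) (Pack ε) as N2. nrm_in N2. apply (f_equal (pwl p)) in N2. nrm_in N2.
  rewrite N2. rewrite_chain Hφ. reflexivity.
Qed.

Context (r : hom B P b) (r_d0 : r ⊚ d0 = idm b) (r_d1 : r ⊚ d1 = t) (r_α : r ◁ α = γ).
#[local] Hint Rewrite r_d0 (comp_reassoc r_d0) r_d1 (comp_reassoc r_d1) : homeq.

Context (κ : cell d1 (d0 ⊚ t)) (Hκ : Pack κ = (d0 ◁ Pack φ) ∙ (α ▷ f) ∙ (d1 ◁ Pack η)).
Local Notation K := (Pack κ).

Lemma adjunction_κ_r : r ◁ K = pvid t.
Proof.
  apply codensity_cell_unique; try bnd.
  rewrite Hκ. nrm. rewrite r_α. nrm. rewrite_chain Hφ.
  interchange γ (Pack ε) as N. nrm_in N. rewrite_chain_rev N.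
  pose proof (f_equal (pwl t) tri_p) as Tt. nrm_in Tt. rewrite_chain Tt. reflexivity.
Qed.

Lemma adjunction_κ_α : (d0 ◁ γ) ∙ (K ▷ p) = α.
Proof.
  rewrite Hκ. nrm.
  pose proof (f_equal (pwl d0) Hφ) as H0. nrm_in H0. rewrite_chain H0.
  interchange α (Pack ε) as N. nrm_in N. rewrite_chain_rev N.
  pose proof (f_equal (pwl d1) tri_p) as T1. nrm_in T1. rewrite_chain T1. reflexivity.
Qed.

Lemma adjunction_κ_D : (D0 ◁ d0 ◁ m) ∙ (D0 ◁ K ▷ t) ∙ (D2 ◁ K) = D1 ◁ K.
Proof.
  rewrite Hκ. nrm.
  interchange (Pack η) (Pack φ) as N1. nrm_in N1.
  apply (f_equal (pwl (D0 ⊚ d1))) in N1. nrm_in N1. rewrite_chain N1.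
  interchange (D0 ◁ α) (f ◁ Pack φ) as N2. nrm_in N2. rewrite_chain N2.
  pose proof (f_equal (pwl (D0 ⊚ d0)) codensity_comparison_mult) as N3. nrm_in N3. rewrite_chain N3.
  interchange (D0 ◁ α) (Pack ε) as N4. apply (f_equal (fun X => X ▷ f)) in N4. nrm_in N4.
  rewrite_chain_rev N4.
  pose proof (f_equal (fun X => (D0 ⊚ d1) ◁ X ▷ f) tri_p) as N5. cbv beta in N5. nrm_in N5.
  rewrite_chain N5.
  pose proof (f_equal (fun X => X ▷ f) cokernel_D1_α) as N6. cbv beta in N6. nrm_in N6.
  rewrite_chain_rev N6. reflexivity.
Qed.

End Kappa.

Lemma comparison_data_of_adjunction :
  exists (r : hom B P b) (r_d0 : r ⊚ d0 = idm b) (r_d1 : r ⊚ d1 = t) (r_α : r ◁ α = γ)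
         (κ : cell d1 (d0 ⊚ t)),
    r ◁ Pack κ = pvid t /\ (d0 ◁ γ) ∙ (Pack κ ▷ p) = α /\
    (D0 ◁ d0 ◁ m) ∙ (D0 ◁ Pack κ ▷ t) ∙ (D2 ◁ Pack κ) = D1 ◁ Pack κ.
Proof.
  destruct codensity_comparison as [φ Hφ].
  destruct (opcomma_1cell (ck_opcomma p C) (idm b) t γ) as (r & r_d0 & r_d1 & r_α); try bnd.
  destruct (PCell_of_boundary ((d0 ◁ Pack φ) ∙ (α ▷ f) ∙ (d1 ◁ Pack η)) d1 (d0 ⊚ t))
    as [κ Hκ]; try bnd.
  exists r, r_d0, r_d1, r_α, κ. repeat split.
  - eapply adjunction_κ_r; eassumption.
  - eapply adjunction_κ_α; eassumption.
  - eapply adjunction_κ_D; eassumption.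
Qed.

Lemma left_adjoint_lax_descent_is_EM (L : ob B) (d : hom B L b) (Ψ : cell (d1 ⊚ d) (d0 ⊚ d)) :
  is_lax_descent C L d Ψ -> exists μ : cell (t ⊚ d) d, is_EM T L d μ /\
    (forall pH : hom B e L, Pack Ψ ▷ pH = α -> Pack μ ▷ pH = γ).
Proof.
  intro Hl. destruct comparison_data_of_adjunction as (r & r_d0 & r_d1 & r_α & κ & κ_r & κ_α & κ_D).
  exists (alg_of_desc r r_d0 r_d1 Ψ). split.
  - exact (lax_descent_is_EM r_d0 r_d1 r_α κ_r κ_α κ_D Hl).
  - intros pH HΨ. now rewrite Pack_alg_of_desc, <- pwl_pwr, HΨ.
Qed.

Lemma left_adjoint_EM_is_lax_descent (L : ob B) (u : hom B L b) (μ : cell (t ⊚ u) u) :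
  is_EM T L u μ -> exists Ψ : cell (d1 ⊚ u) (d0 ⊚ u), is_lax_descent C L u Ψ /\
    (forall pT : hom B e L, u ⊚ pT = p -> Pack μ ▷ pT = γ -> Pack Ψ ▷ pT = α).
Proof.
  intro He. destruct comparison_data_of_adjunction as (r & r_d0 & r_d1 & r_α & κ & κ_r & κ_α & κ_D).
  exists (desc_of_alg κ μ). split.
  - exact (EM_is_lax_descent r_d0 r_d1 r_α κ_r κ_α κ_D He).
  - intros pT E Hμ. rewrite Pack_desc_of_alg. nrm. rewrite <- pwl_pwr, Hμ, E. exact κ_α.
Qed.

End Adjunction.

Section EilenbergMoore.
Context (bT : ob B) (u : hom B bT b) (μ : cell (t ⊚ u) u) (HEM : is_EM T bT u μ).

Lemma EM_reflects_identity {y} (g : hom B y bT) (θ : cell g g) :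
  u ◁ Pack θ = pvid (u ⊚ g) -> θ = vid g.
Proof.
  intro Hθ. destruct (proj2 (proj2 (HEM y)) g g (vid (u ⊚ g))) as [θ0 [_ U]].
  - apply AMor_aobj_of_packed. pack. nrm. reflexivity.
  - transitivity θ0; [symmetry|]; apply U.
    + apply Pack_inj. exact Hθ.
    + apply (hvid _ (tc_ax B)).
Qed.

Lemma EM_free_algebra : exists F : hom B b bT, u ⊚ F = t /\ Pack μ ▷ F = m.
Proof.
  assert (Halg : is_alg T (MkAObj T b t (cd_m p T))).
  { apply is_alg_packed. split; [symmetry; apply codensity_assoc | apply codensity_unit_l]. }
  destruct (proj1 (proj2 (HEM b)) _ Halg) as [F [HF _]].
  exists F. now apply aobj_of_eq_iff in HF.
Qed.

Lemma EM_left_adjoint : has_left_adjoint u.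
Proof.
  destruct EM_free_algebra as (F & uF & μF).
  pose proof (comp_reassoc uF) as uF'.
  assert (μF' : forall z (k : hom B z b), Pack μ ▷ (F ⊚ k) = m ▷ k)
    by (intros; now rewrite pwr_comp, μF).
  pose proof (proj1 (HEM bT) (idm bT)) as Hu.
  unfold aobj_of in Hu. apply is_alg_packed in Hu as [Hu_mult Hu_unit].
  pack_in Hu_mult. pack_in Hu_unit. nrm_in Hu_mult. nrm_in Hu_unit.
  destruct (PCell_of_boundary (Pack μ) (u ⊚ (F ⊚ u)) (u ⊚ idm bT)) as [ξ Hξ];
    [bnd_with ltac:(rewrite ?uF') | bnd |].
  (* The counit lifts μ, an algebra morphism from (u F u, m u) to (u, μ). *)
  destruct (proj2 (proj2 (HEM bT)) (F ⊚ u) (idm bT) ξ) as [ε [Hε _]].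
  { apply AMor_aobj_of_packed. rewrite Hξ. nrm. now rewrite μF'. }
  destruct (PCell_of_boundary η (idm b) (u ⊚ F)) as [ηF HηF]; [bnd | bnd_with ltac:(rewrite ?uF) |].
  assert (uε : u ◁ Pack ε = Pack μ) by (rewrite <- Hξ, <- Hε; reflexivity).
  exists F. apply is_adjunction_packed. exists ηF, ε. split.
  - destruct (PCell_of_boundary ((Pack ε ▷ F) ∙ (F ◁ Pack ηF)) F F) as [θ Hθ]; try bnd.
    rewrite <- Hθ. unfold pvid. f_equal. apply EM_reflects_identity.
    rewrite Hθ. nrm. rewrite uε, μF, HηF. rewrite uF. apply codensity_unit_r.
  - rewrite uε, HηF. exact Hu_unit.
Qed.

End EilenbergMoore.

End CodensityDescent.

(** * Adjunctions *)

Section LeftAdjointCodensity.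
Context {B : TwoCat} {e b : ob B} (p : hom B e b) (f : hom B b e)
  (η : cell (idm b) (p ⊚ f)) (ε : cell (f ⊚ p) (idm e))
  (tri_f : (Pack ε ▷ f) ∙ (f ◁ Pack η) = pvid f) (tri_p : (p ◁ Pack ε) ∙ (Pack η ▷ p) = pvid p).

Lemma left_adjoint_codensity : inhabited (Codensity p).
Proof.
  destruct (PCell_of_boundary (p ◁ Pack ε) ((p ⊚ f) ⊚ p) p) as [γ Hγ]; try bnd.
  destruct (PCell_of_boundary (p ◁ Pack ε ▷ f) ((p ⊚ f) ⊚ (p ⊚ f)) (p ⊚ f)) as [m Hm]; try bnd.
  assert (ran : forall (k : hom B b b) (δ : cell (k ⊚ p) p),
             exists! β : cell k (p ⊚ f), vcomp γ (wr β p) = δ).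
  { intros k δ.
    destruct (PCell_of_boundary ((Pack δ ▷ f) ∙ (k ◁ Pack η)) k (p ⊚ f)) as [β Hβ]; try bnd.
    exists β. split.
    - to_packed. rewrite Hγ, Hβ. nrm.
      interchange (Pack δ) (Pack ε) as N. nrm_in N. rewrite_chain_rev N.
      pose proof (f_equal (pwl k) tri_p) as Tk. nrm_in Tk. rewrite_chain Tk. reflexivity.
    - intros β' Hβ'. to_packed_in Hβ'. rewrite <- Hβ', Hγ in Hβ.
      apply Pack_inj. rewrite Hβ. nrm.
      interchange (Pack β') (Pack η) as N. nrm_in N. rewrite_chain N.
      pose proof (f_equal (pwl p) tri_f) as Tp. nrm_in Tp. rewrite_chain Tp. reflexivity. }
  assert (mE : cast (asc (p ⊚ f) (p ⊚ f) p) eq_refl (vcomp γ (wr m p))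
               = vcomp γ (wl (p ⊚ f) γ)).
  { to_packed. rewrite Hγ, Hm. nrm.
    interchange (Pack ε) (Pack ε) as N. nrm_in N. apply (f_equal (pwl p)) in N. nrm_in N.
    now rewrite N. }
  assert (ηE : cast (lid p) eq_refl (vcomp γ (wr η p)) = vid p).
  { to_packed. now rewrite Hγ. }
  exact (inhabits (@MkCodensity B e b p (p ⊚ f) γ ran m mE η ηE)).
Qed.

End LeftAdjointCodensity.

Section Adjunctions.
Context {B : TwoCat}.

Lemma adjunction_comp {a b c : ob B} (f : hom B b a) (g : hom B a b) (f' : hom B a c)
  (g' : hom B c a) :
  is_adjunction f g -> is_adjunction f' g' -> is_adjunction (f' ⊚ f) (g ⊚ g').
Proof.
  rewrite !is_adjunction_packed. intros (η & ε & T1 & T2) (η' & ε' & T1' & T2').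
  destruct (PCell_of_boundary ((g ◁ Pack η' ▷ f) ∙ Pack η) (idm b) ((g ⊚ g') ⊚ (f' ⊚ f)))
    as [η2 Hη2]; try bnd.
  destruct (PCell_of_boundary (Pack ε' ∙ (f' ◁ Pack ε ▷ g')) ((f' ⊚ f) ⊚ (g ⊚ g')) (idm c))
    as [ε2 Hε2]; try bnd.
  exists η2, ε2. rewrite Hη2, Hε2. split; nrm.
  - interchange (Pack ε) (Pack η') as N. nrm_in N.
    apply (f_equal (fun X => f' ◁ X ▷ f)) in N. nrm_in N. rewrite_chain N.
    pose proof (f_equal (fun X => X ▷ f) T1') as N1. cbv beta in N1. nrm_in N1. rewrite_chain N1.
    pose proof (f_equal (pwl f') T1) as N2. nrm_in N2. rewrite_chain N2. reflexivity.
  - interchange (Pack η') (Pack ε) as N. nrm_in N.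
    apply (f_equal (fun X => g ◁ X ▷ g')) in N. nrm_in N. rewrite_chain_rev N.
    pose proof (f_equal (pwl g) T2') as N1. nrm_in N1. rewrite_chain N1.
    pose proof (f_equal (fun X => X ▷ g') T2) as N2. cbv beta in N2. nrm_in N2. rewrite_chain N2.
    reflexivity.
Qed.

Lemma idempotent_retract_is_id {a b : ob B} (f : hom B a b) (X Y : PCell a b) :
  src X = f -> tgt X = f -> src Y = f -> Y ∙ X = pvid f -> X ∙ X = X -> X = pvid f.
Proof.
  intros sX tX sY YX XX.
  transitivity (pvid f ∙ X); [symmetry; apply pvcomp_idl; congruence|].
  rewrite <- YX at 1. rewrite pvcompA, XX by congruence. exact YX.
Qed.

Section AdjointEquivalence.
Context {a b : ob B} (G : hom B a b) (F : hom B b a)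
  (e0 : cell (F ⊚ G) (idm a)) (e0i : cell (idm a) (F ⊚ G))
  (e0_ii : Pack e0i ∙ Pack e0 = pvid (F ⊚ G)) (e0_i : Pack e0 ∙ Pack e0i = pvid (idm a))
  (u0 : cell (G ⊚ F) (idm b)) (u0i : cell (idm b) (G ⊚ F))
  (u0_ii : Pack u0i ∙ Pack u0 = pvid (G ⊚ F)) (u0_i : Pack u0 ∙ Pack u0i = pvid (idm b)).

(* The standard correction of the counit turning an equivalence into an adjoint one. *)
Definition adjusted_counit : PCell a a := Pack e0 ∙ (F ◁ Pack u0 ▷ G) ∙ (Pack e0i ▷ (F ⊚ G)).
Definition adjusted_counit_inv : PCell a a :=
  (Pack e0 ▷ (F ⊚ G)) ∙ (F ◁ Pack u0i ▷ G) ∙ Pack e0i.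

Lemma adjusted_counit_triangle : (adjusted_counit ▷ F) ∙ (F ◁ Pack u0i) = pvid F.
Proof.
  unfold adjusted_counit. nrm.
  interchange (Pack e0i) (F ◁ Pack u0i) as N. nrm_in N. rewrite_chain N.
  interchange (Pack u0) (Pack u0i) as N2. nrm_in N2. rewrite u0_ii in N2.
  apply (f_equal (pwl F)) in N2. nrm_in N2. rewrite_chain N2.
  pose proof (f_equal (fun X => X ▷ F) e0_i) as N3. cbv beta in N3. nrm_in N3. rewrite_chain N3.
  reflexivity.
Qed.

Lemma adjusted_counit_inv_l : adjusted_counit_inv ∙ adjusted_counit = pvid (F ⊚ G).
Proof.
  unfold adjusted_counit, adjusted_counit_inv. nrm. rewrite_chain e0_ii.
  pose proof (f_equal (fun X => F ◁ X ▷ G) u0_ii) as N. cbv beta in N. nrm_in N. rewrite_chain N.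
  pose proof (f_equal (fun X => X ▷ (F ⊚ G)) e0_i) as N'. cbv beta in N'. nrm_in N'.
  rewrite_chain N'. reflexivity.
Qed.

Lemma adjusted_counit_triangle_G : (G ◁ adjusted_counit) ∙ (Pack u0i ▷ G) = pvid G.
Proof.
  destruct (PCell_of_boundary adjusted_counit (F ⊚ G) (idm a)) as [eps Heps];
    [unfold adjusted_counit; bnd .. |].
  destruct (PCell_of_boundary adjusted_counit_inv (idm a) (F ⊚ G)) as [epsi Hepsi];
    [unfold adjusted_counit_inv; bnd .. |].
  pose proof adjusted_counit_inv_l as I. pose proof adjusted_counit_triangle as T1.
  rewrite <- Heps, <- Hepsi in I. rewrite <- Heps in T1. rewrite <- Heps.
  apply idempotent_retract_is_id with (Y := (Pack u0 ▷ G) ∙ (G ◁ Pack epsi)); try bnd.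
  - nrm. apply (f_equal (pwl G)) in I. nrm_in I. rewrite_chain I.
    pose proof (f_equal (fun X => X ▷ G) u0_i) as N. cbv beta in N. nrm_in N.
    rewrite_chain N. reflexivity.
  - nrm.
    interchange (Pack u0i) (G ◁ Pack eps) as N1. nrm_in N1. rewrite_chain N1.
    interchange (Pack eps) (Pack eps) as N2. nrm_in N2. apply (f_equal (pwl G)) in N2. nrm_in N2.
    rewrite_chain N2.
    interchange (Pack u0i) (Pack u0i) as N3. nrm_in N3. apply (f_equal (fun X => X ▷ G)) in N3.
    nrm_in N3. rewrite_chain N3.
    apply (f_equal (fun X => G ◁ X ▷ G)) in T1. nrm_in T1. rewrite_chain T1. reflexivity.
Qed.

End AdjointEquivalence.

Lemma iso2_packed {a b : ob B} (f g : hom B a b) : iso2 f g -> exists (x : cell f g) (y : cell g f),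
  Pack y ∙ Pack x = pvid f /\ Pack x ∙ Pack y = pvid g.
Proof. intros (x & y & X & Y). exists x, y. now rewrite !pvcomp_Pack, X, Y. Qed.

Lemma equivalence_has_left_adjoint {a b : ob B} (G : hom B a b) :
  is_equivalence G -> exists F : hom B b a, is_adjunction F G.
Proof.
  intros (F & I1 & I2). exists F. apply is_adjunction_packed.
  destruct (iso2_packed I1) as (e0 & e0i & e0_ii & e0_i).
  destruct (iso2_packed I2) as (u0 & u0i & u0_ii & u0_i).
  destruct (PCell_of_boundary (adjusted_counit G F e0 e0i u0) (F ⊚ G) (idm a)) as [eps Heps];
    [unfold adjusted_counit; bnd .. |].
  exists u0i, eps. rewrite Heps. split.
  - exact (adjusted_counit_triangle _ _ _ _ e0_i _ _ u0_ii).
  - exact (adjusted_counit_triangle_G _ _ _ _ e0_ii e0_i _ _ u0_ii u0_i).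
Qed.

End Adjunctions.

(** * The monadicity theorem *)

Section MonadicityTheorem.
Context {B : TwoCat} {e b : ob B} (p : hom B e b).

Lemma monadic_has_left_adjoint : is_monadic p -> has_left_adjoint p.
Proof.
  intros (T & bT & u & μ & HEM & pT & upT & _ & HpT).
  destruct (EM_left_adjoint HEM) as [F HF].
  destruct (equivalence_has_left_adjoint HpT) as [q Hq].
  exists (q ⊚ F). rewrite <- upT. exact (adjunction_comp HF Hq).
Qed.

Lemma monadic_effective_faithful (C : CokernelDiagram p) :
  is_monadic p -> is_effective_faithful p.
Proof.
  intro Hm. destruct (monadic_has_left_adjoint Hm) as [f Hadj].
  apply is_adjunction_packed in Hadj as (η & ε & _ & tri_p).
  destruct Hm as (T & bT & u & μ & HEM & pT & upT & HμpT & HpT).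
  destruct (left_adjoint_EM_is_lax_descent C f η ε tri_p HEM) as (Ψ & Hlax & HΨ).
  exists C, bT, u, Ψ. split; [exact Hlax|]. exists pT, upT. split; [|exact HpT].
  apply cast_eq_of_Pack. pack. apply HΨ; [exact upT|]. to_packed_in HμpT. exact HμpT.
Qed.

Lemma left_adjoint_effective_faithful_monadic :
  has_left_adjoint p -> is_effective_faithful p -> is_monadic p.
Proof.
  intros [f Hadj] (C & L & d & Ψ & Hlax & pH & dpH & HΨpH & HpH).
  apply is_adjunction_packed in Hadj as (η & ε & tri_f & tri_p).
  destruct (left_adjoint_codensity η ε tri_f tri_p) as [T].
  destruct (left_adjoint_lax_descent_is_EM T f η ε tri_p Hlax) as (μ & HEM & Hμ).
  exists T, L, d, μ. split; [exact HEM|]. exists pH, dpH. split; [|exact HpH].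
  apply cast_eq_of_Pack. pack. apply Hμ. to_packed_in HΨpH. exact HΨpH.
Qed.

Theorem monadic_iff_left_adjoint_effective_faithful :
  has_cokernel_diagram p -> (is_monadic p <-> has_left_adjoint p /\ is_effective_faithful p).
Proof.
  intros [C]. split.
  - intro Hm. split; [exact (monadic_has_left_adjoint Hm) |].
    exact (monadic_effective_faithful C Hm).
  - intros [Hl He]. exact (left_adjoint_effective_faithful_monadic Hl He).
Qed.

End MonadicityTheorem.

(** * Duality *)

Definition coData (C : TwoCatData) : TwoCatData :=
  {| ob := ob C;
     hom := hom C;
     idm := @idm C;
     comp := @comp C;
     cell := fun a b (f g : hom C a b) => @cell C a b g f;
     vid := @vid C;
     vcomp := fun a b f g h β α => @vcomp C a b h g f α β;
     hcomp := fun a b c f f' g g' β α => @hcomp C a b c f' f g' g β α |}.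

Lemma cast_co (C : TwoCatData) (a b : ob C) (f f' g g' : hom C a b)
  (e1 : f = f') (e2 : g = g') (x : @cell C a b g f) :
  @cast (coData C) a b f f' g g' e1 e2 x = @cast C a b g g' f f' e2 e1 x.
Proof. now destruct e1, e2. Qed.

Lemma cast_op (C : TwoCatData) (a b : ob C) (f f' g g' : hom C b a)
  (e1 : f = f') (e2 : g = g') (x : @cell C b a f g) :
  @cast (opData C) a b f f' g g' e1 e2 x = @cast C b a f f' g g' e1 e2 x.
Proof. now destruct e1, e2. Qed.

Definition coAx (C : TwoCatData) (H : TwoCatAxioms C) : TwoCatAxioms (coData C).
Proof.
  unshelve eapply (Build_TwoCatAxioms (coData C)
    (fun a b c d h g f => assoc C H a b c d h g f)
    (fun a b f => idl C H a b f) (fun a b f => idr C H a b f)); cbn; intros.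
  - symmetry; apply (vassoc C H).
  - apply (vidr C H).
  - apply (vidl C H).
  - apply (hvid C H).
  - apply (interchange C H).
  - rewrite cast_co. exact (hassoc C H _ _ _ _ _ _ _ _ _ _ γ β α).
  - rewrite cast_co. exact (hidl C H _ _ _ _ α).
  - rewrite cast_co. exact (hidr C H _ _ _ _ α).
Defined.

Definition co (A : TwoCat) : TwoCat := @MkTwoCat (coData A) (coAx (tc_ax A)).

Ltac unfold_duals := unfold wl, wr, lid, rid, asc in *;
  cbn [co op coop tc_data coData opData coopData vcomp hcomp vid comp idm cell hom ob] in *;
  rewrite ?cast_co, ?cast_op in *.

Lemma is_adjunction_op (X : TwoCat) (a b : ob X) (f : hom X a b) (g : hom X b a) :
  @is_adjunction (op X) a b f g <-> @is_adjunction X a b g f.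
Proof.
  unfold is_adjunction.
  split; intros (η & ε & H1 & H2); exists η, ε; unfold_duals;
    to_packed_in H1; to_packed_in H2; nrm_in H1; nrm_in H2; split; to_packed; nrm; assumption.
Qed.

Lemma is_adjunction_co (X : TwoCat) (a b : ob X) (f : hom X b a) (g : hom X a b) :
  @is_adjunction (co X) a b f g <-> @is_adjunction X b a g f.
Proof.
  unfold is_adjunction.
  split; intros (η & ε & H1 & H2); exists ε, η; unfold_duals;
    to_packed_in H1; to_packed_in H2; nrm_in H1; nrm_in H2; split; to_packed; nrm; assumption.
Qed.

Section CoDuality.
Context (X : TwoCat).

Lemma Pack_co_eq_iff {a b : ob X} (f g f' g' : hom X a b) (x : @cell X a b g f)
  (y : @cell X a b g' f') :
  @Pack (co X) a b f g x = @Pack (co X) a b f' g' y <-> @Pack X a b g f x = @Pack X a b g' f' y.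
Proof.
  split; intro E.
  - assert (f = f') by exact (f_equal (@src (co X) a b) E).
    assert (g = g') by exact (f_equal (@tgt (co X) a b) E). subst.
    apply (@Pack_inj (co X)) in E. now subst.
  - assert (f = f') by exact (f_equal (@tgt X a b) E).
    assert (g = g') by exact (f_equal (@src X a b) E). subst.
    apply Pack_inj in E. now subst.
Qed.

Lemma opcomma_co {e b : ob X} (p : hom X e b) (P : ob X) (d0 d1 : hom X b P)
  (α : @cell X e P (d1 ⊚ p) (d0 ⊚ p)) :
  is_opcomma p P d0 d1 α -> @is_opcomma (co X) e b p P d1 d0 α.
Proof.
  intros Hoc y. destruct (Hoc y) as [H1 H2]. split.
  - intros [h0 h1 x]. apply (unique_iff (H1 (MkOTriple p y h1 h0 x))). intro h.
    unfold otriple_of. rewrite OTriple_eq_iff, (@OTriple_eq_iff (co X)), Pack_co_eq_iff.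
    unfold_duals. rewrite !Pack_cast. tauto.
  - intros h h' ξ0 ξ1 Hm. destruct (H2 h' h ξ1 ξ0) as [ξ [Hξ U]].
    + unfold OTripleMor, otriple_of in *. unfold_duals. to_packed_in Hm. to_packed. now symmetry.
    + exists ξ. split; [tauto | intros ξ' Hξ'; apply U; tauto].
Qed.

Lemma pushout_co {s x0 x1 : ob X} (f0 : hom X s x0) (f1 : hom X s x1) Q q0 q1 E :
  is_pushout f0 f1 Q q0 q1 E -> @is_pushout (co X) s x1 x0 f1 f0 Q q1 q0 (eq_sym E).
Proof.
  intros Hp y. destruct (Hp y) as [H1 H2]. split.
  - intros [k0 k1 ke]. destruct (H1 (MkPPair f0 f1 y k1 k0 (eq_sym ke))) as [k [Hk U]].
    exists k. cbn in *. split; [tauto | intros k' Hk'; apply U; tauto].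
  - intros k k' ξ0 ξ1 Hm. destruct (H2 k' k ξ1 ξ0) as [ξ [Hξ U]].
    + unfold PPairMor, ppair_of in *. cbn [k0 k1 ke] in *. unfold_duals.
      apply cast_eq_of_Pack. to_packed_in Hm. pack. nrm_in Hm. nrm. now symmetry.
    + exists ξ. split; [tauto | intros ξ' Hξ'; apply U; tauto].
Qed.

Context {e b : ob X} (p : hom X e b) (C : CokernelDiagram p).

Definition cokernel_co : @CokernelDiagram (co X) e b p.
Proof.
  refine (@MkCokernelDiagram (co X) e b p (ck_P p C) (ck_d1 p C) (ck_d0 p C) (ck_α p C)
    (opcomma_co (ck_opcomma p C)) (ck_Q p C) (ck_D2 p C) (ck_D0 p C) (eq_sym (ck_DE p C))
    (pushout_co (ck_pushout p C)) (ck_D1 p C) (ck_D1e0 p C) (ck_D1e1 p C) _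
    (ck_s0 p C) (ck_s0e1 p C) (ck_s0e0 p C) _); unfold_duals; apply cast_eq_of_Pack; pack; nrm.
  - rewrite (cokernel_D1_α C). now nrm.
  - exact (cokernel_s0_α C).
Defined.

Local Notation C' := cokernel_co.

Lemma is_desc_co y (h : hom X y b) (β : @cell X y (ck_P p C) (ck_d1 p C ⊚ h) (ck_d0 p C ⊚ h)) :
  is_desc C' (MkDObj C' y h β) <-> is_desc C (MkDObj C y h β).
Proof.
  unfold is_desc, cokernel_co; cbn [dh dβ ck_D0 ck_D1 ck_D2 ck_d0 ck_d1 ck_s0 ck_P ck_Q ck_DE
    ck_D1e0 ck_D1e1 ck_s0e0 ck_s0e1 ck_α]. unfold_duals.
  split; intros [H1 H2]; to_packed_in H1; to_packed_in H2; nrm_in H1; nrm_in H2;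
    split; to_packed; nrm; assumption.
Qed.

Lemma dobj_of_co y L (d : hom X L b) (Ψ : @cell X L (ck_P p C) (ck_d1 p C ⊚ d) (ck_d0 p C ⊚ d))
  (g : hom X y L) (h : hom X y b) (β : @cell X y (ck_P p C) (ck_d1 p C ⊚ h) (ck_d0 p C ⊚ h)) :
  dobj_of C' d Ψ g = MkDObj C' y h β <-> dobj_of C d Ψ g = MkDObj C y h β.
Proof.
  rewrite !dobj_of_eq_iff. unfold pwr. cbn [body].
  split; intros [E1 E2]; split; try exact E1; revert E2; rewrite Pack_co_eq_iff; unfold_duals; auto.
Qed.

Lemma DMor_dobj_of_co y L (d : hom X L b)
  (Ψ : @cell X L (ck_P p C) (ck_d1 p C ⊚ d) (ck_d0 p C ⊚ d)) (g g' : hom X y L)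
  (ξ : @cell X y b (d ⊚ g') (d ⊚ g)) :
  DMor C' (dobj_of C' d Ψ g) (dobj_of C' d Ψ g') ξ <->
  DMor C (dobj_of C d Ψ g') (dobj_of C d Ψ g) ξ.
Proof.
  unfold DMor, dobj_of, cokernel_co; cbn [dh dβ ck_d0 ck_d1 ck_P]. unfold_duals.
  split; intro Hm; to_packed_in Hm; to_packed; nrm_in Hm; nrm; now symmetry.
Qed.

End CoDuality.

Lemma equivalence_co (X : TwoCat) {a c : ob X} (f : hom X a c) :
  is_equivalence f -> @is_equivalence (co X) a c f.
Proof.
  intros (g & (θ & θ' & E1 & E2) & (κ & κ' & F1 & F2)). exists g.
  split; [exists θ', θ | exists κ', κ]; now split.
Qed.

Lemma effective_faithful_co (X : TwoCat) {e b : ob X} (p : hom X e b) :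
  is_effective_faithful p -> @is_effective_faithful (co X) e b p.
Proof.
  intros (C & L & d & Ψ & Hlax & pH & dpH & HΨ & HpH).
  exists (cokernel_co C), L, d, Ψ. split.
  - intro y. destruct (Hlax y) as (Hdesc & Hobj & Hmor). split; [|split].
    + intro g. unfold dobj_of at 1. apply is_desc_co. unfold cokernel_co; cbn [ck_d0 ck_d1 ck_P].
      unfold_duals. exact (Hdesc g).
    + intros [h β] Hd. rewrite is_desc_co in Hd.
      apply (unique_iff (Hobj _ Hd)). intro g. symmetry. apply dobj_of_co.
    + intros g g' ξ Hm. destruct (Hmor g' g ξ) as [θ [Hθ U]].
      * now apply DMor_dobj_of_co.
      * exists θ. split; [exact Hθ | intros θ' H'; now apply U].
  - exists pH, dpH. split; [|now apply equivalence_co].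
    unfold cokernel_co; cbn [ck_d0 ck_d1 ck_P ck_α]. unfold_duals.
    apply cast_eq_of_Pack. to_packed_in HΨ. pack. nrm_in HΨ. nrm. exact HΨ.
Qed.

Lemma has_cokernel_diagram_co (X : TwoCat) {e b : ob X} (p : hom X e b) :
  has_cokernel_diagram p -> @has_cokernel_diagram (co X) e b p.
Proof. intros [C]. exact (inhabits (cokernel_co C)). Qed.

Lemma effective_faithful_co_iff (X : TwoCat) {e b : ob X} (p : hom X e b) :
  @is_effective_faithful (co X) e b p <-> is_effective_faithful p.
Proof.
  split; [|apply effective_faithful_co].
  intro H. pose proof (effective_faithful_co H) as H'.
  (* [co (co X)] has the data of [X] up to conversion; only the axiom proofs differ. *)
  destruct X as [[ob hom idm comp cell vid vcomp hcomp] ax]; unfold co in H'; simpl in H'.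
  match type of H' with @is_effective_faithful (@MkTwoCat _ ?ax') _ _ _ =>
    change (@is_effective_faithful
              (@MkTwoCat (MkTwoCatData ob hom idm comp cell vid vcomp hcomp) ax') e b p) in H';
    rewrite (proof_irrelevance _ ax' ax) in H'
  end.
  exact H'.
Qed.

Lemma monadic_coop_iff (A : TwoCat) {a b : ob A} (l : hom A a b) :
  @is_monadic (coop A) b a l <-> @is_monadic (co (op A)) b a l.
Proof.
  unfold coop. now rewrite (proof_irrelevance _ (coopAx A (tc_ax A)) (coAx (opAx A (tc_ax A)))).
Qed.

Lemma has_left_adjoint_co_op (A : TwoCat) {a b : ob A} (l : hom A a b) :
  @has_left_adjoint (co (op A)) b a l <-> has_left_adjoint l.
Proof.
  unfold has_left_adjoint.
  split; intros [f Hf]; exists f; revert Hf; now rewrite is_adjunction_co, is_adjunction_op.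
Qed.

Lemma has_left_adjoint_op (A : TwoCat) {a b : ob A} (l : hom A a b) :
  @has_left_adjoint (op A) b a l <-> has_right_adjoint l.
Proof.
  unfold has_left_adjoint, has_right_adjoint.
  split; intros [f Hf]; exists f; revert Hf; now rewrite is_adjunction_op.
Qed.

Theorem corollary5p12 (A : TwoCat) (a b : ob A) (l : hom A a b)
  (Hker : has_kernel_diagram A l) :
  (is_cokleisli A l <-> has_left_adjoint l /\ is_effective_opfaithful A l) /\
  (is_kleisli A l <-> has_right_adjoint l /\ is_effective_opfaithful A l).
Proof.
  unfold is_cokleisli, is_kleisli, is_effective_opfaithful. split.
  - rewrite monadic_coop_iff,
      (monadic_iff_left_adjoint_effective_faithful (has_cokernel_diagram_co Hker)).
    now rewrite effective_faithful_co_iff, has_left_adjoint_co_op.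
  - rewrite (monadic_iff_left_adjoint_effective_faithful Hker).
    now rewrite has_left_adjoint_op.
Qed.
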